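(* Let $K\subseteq\mathbb{R}^d$ be a compact connected set. Suppose that for every $x\in K$ there is $C_x>0$ such that for all $f\in C^1(K)$ and all $y\in K\setminus\{x\}$, $\frac{|f(y)-f(x)|}{|y-x|}\le C_x\|f\|_{C^1(K)}$. Then $K$ is pointwise Whitney regular.
   Context: $C^1(K)$ is the set of $f:K\to\mathbb{R}$ admitting a continuous $df:K\to\mathbb{R}^d$ with $\lim_{y\to x,\,y\in K\setminus\{x\}}\frac{f(y)-f(x)-\langle df(x),y-x\rangle}{|y-x|}=0$ for all $x\in K$, normed by $\|f\|_{C^1(K)}=\|f\|_K+\inf\{\|df\|_K: df \text{ a continuous derivative of } f\}$. $K$ is pointwise Whitney regular if for every $x\in K$ there are a neighbourhood $V_x$ of $x$ and $C_x>0$ such that every $y\in V_x\cap K$ is joined to $x$ by a rectifiable path in $K$ of length at most $C_x|x-y|$ (a rectifiable path is a continuous map $\gamma:[a,b]\to K$ of finite length $\sup\sum_j|\gamma(t_j)-\gamma(t_{j-1})|$). *)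

From Stdlib Require Import Reals Lra List Classical ClassicalEpsilon.
Open Scope R_scope.

(* Points of R^d: real sequences vanishing from index d on (so that
   coordinates 0..d-1 determine the point). *)
Definition Rd (d : nat) : Type :=
  { x : nat -> R | forall i, (d <= i)%nat -> x i = 0 }.

Definition coord {d : nat} (x : Rd d) (i : nat) : R := proj1_sig x i.

Fixpoint sumR (n : nat) (f : nat -> R) : R :=
  match n with
  | O => 0
  | S m => sumR m f + f m
  end.

Definition vnorm {d : nat} (x : Rd d) : R :=
  sqrt (sumR d (fun i => coord x i ^ 2)).
Definition distRd {d : nat} (x y : Rd d) : R :=
  sqrt (sumR d (fun i => (coord x i - coord y i) ^ 2)).
Definition inner_diff {d : nat} (v y x : Rd d) : R :=
  sumR d (fun i => coord v i * (coord y i - coord x i)).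

Definition open_set {d : nat} (V : Rd d -> Prop) : Prop :=
  forall x, V x -> exists r, r > 0 /\ forall y, distRd y x < r -> V y.

Definition compact_Rd {d : nat} (K : Rd d -> Prop) : Prop :=
  forall (I : Type) (U : I -> Rd d -> Prop),
    (forall i, open_set (U i)) ->
    (forall x, K x -> exists i, U i x) ->
    exists l : list I, forall x, K x -> exists i, In i l /\ U i x.

Definition connected_Rd {d : nat} (K : Rd d -> Prop) : Prop :=
  forall U V : Rd d -> Prop, open_set U -> open_set V ->
    (forall x, K x -> U x \/ V x) ->
    (forall x, K x -> U x -> V x -> False) ->
    (forall x, K x -> U x) \/ (forall x, K x -> V x).

(* supremum / infimum of a set of reals (meaningful when they exist) *)
Definition supr (E : R -> Prop) : R := epsilon (inhabits 0) (fun l => is_lub E l).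
Definition is_glb (E : R -> Prop) (l : R) : Prop :=
  (forall r, E r -> l <= r) /\ (forall m, (forall r, E r -> m <= r) -> m <= l).
Definition infr (E : R -> Prop) : R := epsilon (inhabits 0) (fun l => is_glb E l).

Definition supK {d : nat} (K : Rd d -> Prop) (g : Rd d -> R) : R :=
  supr (fun r => exists x, K x /\ r = g x).

(* df is a continuous derivative of f on K (Whitney-type C^1 on K) *)
Definition is_C1_deriv {d : nat} (K : Rd d -> Prop) (f : Rd d -> R)
    (df : Rd d -> Rd d) : Prop :=
  (forall x, K x -> forall eps, eps > 0 -> exists delta, delta > 0 /\
      forall y, K y -> distRd y x < delta -> distRd (df y) (df x) < eps) /\
  (forall x, K x -> forall eps, eps > 0 -> exists delta, delta > 0 /\
      forall y, K y -> y <> x -> distRd y x < delta ->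
        Rabs ((f y - f x - inner_diff (df x) y x) / distRd y x) < eps).

Definition C1_on {d : nat} (K : Rd d -> Prop) (f : Rd d -> R) : Prop :=
  exists df, is_C1_deriv K f df.

Definition C1norm {d : nat} (K : Rd d -> Prop) (f : Rd d -> R) : R :=
  supK K (fun x => Rabs (f x)) +
  infr (fun r => exists df, is_C1_deriv K f df /\ r = supK K (fun x => vnorm (df x))).

Definition path_in {d : nat} (K : Rd d -> Prop) (gamma : R -> Rd d) (a b : R) : Prop :=
  a <= b /\
  (forall t, a <= t <= b -> K (gamma t)) /\
  (forall t, a <= t <= b -> forall eps, eps > 0 -> exists delta, delta > 0 /\
     forall s, a <= s <= b -> Rabs (s - t) < delta -> distRd (gamma s) (gamma t) < eps).

Definition partition (a b : R) (n : nat) (t : nat -> R) : Prop :=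
  t O = a /\ t n = b /\ forall j, (j < n)%nat -> t j <= t (S j).

Definition poly_length {d : nat} (gamma : R -> Rd d) (n : nat) (t : nat -> R) : R :=
  sumR n (fun j => distRd (gamma (t (S j))) (gamma (t j))).

Definition partition_sums {d : nat} (gamma : R -> Rd d) (a b : R) (r : R) : Prop :=
  exists n t, partition a b n t /\ r = poly_length gamma n t.

Definition rectifiable {d : nat} (gamma : R -> Rd d) (a b : R) : Prop :=
  exists M, forall r, partition_sums gamma a b r -> r <= M.

Definition path_length {d : nat} (gamma : R -> Rd d) (a b : R) : R :=
  supr (partition_sums gamma a b).

Definition pointwise_Whitney_regular {d : nat} (K : Rd d -> Prop) : Prop :=
  forall x, K x -> exists (V : Rd d -> Prop) (C : R),
    open_set V /\ V x /\ C > 0 /\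
    forall y, V y -> K y ->
      exists (gamma : R -> Rd d) (a b : R),
        path_in K gamma a b /\ gamma a = x /\ gamma b = y /\
        rectifiable gamma a b /\ path_length gamma a b <= C * distRd x y.

(* Fix x in K and a scale s > 0, and let rho_s(x, .) be the infimum of the
   lengths of s-chains in K from x (finite since K is connected).  The function
   min(10, rho_s(x, .)) is 1-Lipschitz at scale s, so it is uniformly
   approximated by C^1 functions of C^1 norm at most 18: soft minima, over the
   points p of a finite eps-net of K, of the parabolas
   w |-> min(10, rho_s(x, p)) + |w - p|^2 / eps.  The hypothesis
   at x then yields rho_s(x, z) <= 18 C_x |z - x| for z close to x, uniformly in
   s.  Finally, by compactness, approximate midpoints of such fine chains have
   cluster points, and dyadic refinement produces a (18 C_x |z - x|)-Lipschitz path
   from x to z parametrised by [0, 1], hence rectifiable of at most that length. *)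

From Stdlib Require Import Reals Lra Lia ZArith List Classical ClassicalEpsilon
  FunctionalExtensionality ProofIrrelevance.
Open Scope R_scope.

Lemma sumR_ext n f g : (forall i, (i < n)%nat -> f i = g i) -> sumR n f = sumR n g.
Proof.
  induction n as [|n IH]; simpl; intros H; auto.
  rewrite IH, H; [reflexivity | lia | intros; apply H; lia].
Qed.

Lemma sumR_plus n f g : sumR n (fun i => f i + g i) = sumR n f + sumR n g.
Proof. induction n; simpl; [lra|]. rewrite IHn; lra. Qed.

Lemma sumR_minus n f g : sumR n (fun i => f i - g i) = sumR n f - sumR n g.
Proof. induction n; simpl; [lra|]. rewrite IHn; lra. Qed.

Lemma sumR_scal n c f : sumR n (fun i => c * f i) = c * sumR n f.
Proof. induction n; simpl; [lra|]. rewrite IHn; lra. Qed.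

Lemma sumR_const n c : sumR n (fun _ => c) = INR n * c.
Proof. induction n; simpl sumR; [simpl; ring|]. rewrite IHn, S_INR; ring. Qed.

Lemma sumR_le n f g : (forall i, (i < n)%nat -> f i <= g i) -> sumR n f <= sumR n g.
Proof.
  induction n; simpl; intros H; [lra|].
  pose proof (H n ltac:(lia)). assert (sumR n f <= sumR n g) by (apply IHn; intros; apply H; lia). lra.
Qed.

Lemma sumR_nonneg n f : (forall i, (i < n)%nat -> 0 <= f i) -> 0 <= sumR n f.
Proof. intros H. rewrite <- (Rmult_0_r (INR n)), <- sumR_const. apply sumR_le; auto. Qed.

Lemma sumR_term_le n f i : (forall j, (j < n)%nat -> 0 <= f j) -> (i < n)%nat -> f i <= sumR n f.
Proof.
  induction n; intros H Hi; [lia|]. simpl.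
  assert (0 <= sumR n f) by (apply sumR_nonneg; intros; apply H; lia).
  destruct (Nat.eq_dec i n) as [->|Hin]; [lra|].
  assert (f i <= sumR n f) by (apply IHn; [intros; apply H|]; lia).
  pose proof (H n ltac:(lia)). lra.
Qed.

Definition lsum {A : Type} (l : list A) (F : A -> R) : R :=
  fold_right (fun p acc => F p + acc) 0 l.

Section ListSums.
Context {A : Type}.
Implicit Types (l : list A) (F G : A -> R).

Lemma lsum_ext l F G : (forall p, In p l -> F p = G p) -> lsum l F = lsum l G.
Proof. induction l; simpl; intros H; auto. rewrite H, IHl; auto. Qed.

Lemma lsum_plus l F G : lsum l (fun p => F p + G p) = lsum l F + lsum l G.
Proof. induction l; simpl; [ring|]. rewrite IHl; ring. Qed.

Lemma lsum_scal l c F : lsum l (fun p => c * F p) = c * lsum l F.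
Proof. induction l; simpl; [ring|]. rewrite IHl; ring. Qed.

Lemma lsum_const l c : lsum l (fun _ => c) = INR (length l) * c.
Proof. induction l; simpl lsum; [simpl; ring|]. rewrite IHl. simpl length. rewrite S_INR. ring. Qed.

Lemma lsum_le l F G : (forall p, In p l -> F p <= G p) -> lsum l F <= lsum l G.
Proof.
  induction l; simpl; intros H; [lra|].
  pose proof (H a (or_introl eq_refl)). pose proof (IHl (fun p Hp => H p (or_intror Hp))). lra.
Qed.

Lemma lsum_nonneg l F : (forall p, In p l -> 0 <= F p) -> 0 <= lsum l F.
Proof. intros H. rewrite <- (Rmult_0_r (INR (length l))), <- lsum_const. apply lsum_le; auto. Qed.

Lemma lsum_term_le l F q : (forall p, In p l -> 0 <= F p) -> In q l -> F q <= lsum l F.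
Proof.
  induction l; simpl; intros H Hq; [contradiction|].
  pose proof (lsum_nonneg l F (fun p Hp => H p (or_intror Hp))).
  destruct Hq as [->|Hq]; [lra|].
  pose proof (H a (or_introl eq_refl)). pose proof (IHl (fun p Hp => H p (or_intror Hp)) Hq). lra.
Qed.

End ListSums.

Definition enorm (n : nat) (a : nat -> R) : R := sqrt (sumR n (fun i => a i ^ 2)).

Lemma sumR_sq_nonneg n a : 0 <= sumR n (fun i => a i ^ 2).
Proof. apply sumR_nonneg; intros; nra. Qed.

Lemma enorm_nonneg n a : 0 <= enorm n a.
Proof. apply sqrt_pos. Qed.

Lemma enorm_ext n a b : (forall i, (i < n)%nat -> a i = b i) -> enorm n a = enorm n b.
Proof. intros H; unfold enorm; f_equal; apply sumR_ext; intros; rewrite H; auto. Qed.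

Lemma enorm_zero n : enorm n (fun _ => 0) = 0.
Proof. unfold enorm. rewrite (sumR_ext n _ (fun _ => 0)) by (intros; ring). rewrite sumR_const, Rmult_0_r. apply sqrt_0. Qed.

Lemma enorm_S n a : enorm (S n) a = sqrt (enorm n a ^ 2 + a n ^ 2).
Proof. unfold enorm; simpl sumR. rewrite <- Rsqr_pow2, Rsqr_sqrt by apply sumR_sq_nonneg. reflexivity. Qed.

Lemma cauchy_schwarz2 a b c e : a * c + b * e <= sqrt (a ^ 2 + b ^ 2) * sqrt (c ^ 2 + e ^ 2).
Proof. pose proof (sqrt_cauchy a b c e). rewrite !Rsqr_pow2 in H. exact H. Qed.

Lemma cauchy_schwarz n a b : sumR n (fun i => a i * b i) <= enorm n a * enorm n b.
Proof.
  induction n.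
  - unfold enorm; simpl; rewrite sqrt_0; lra.
  - rewrite !enorm_S. simpl sumR. eapply Rle_trans; [|apply cauchy_schwarz2].
    pose proof (enorm_nonneg n a). pose proof (enorm_nonneg n b). lra.
Qed.

Lemma minkowski2 A B a b : 0 <= A -> 0 <= B ->
  sqrt ((A + B) ^ 2 + (a + b) ^ 2) <= sqrt (A ^ 2 + a ^ 2) + sqrt (B ^ 2 + b ^ 2).
Proof.
  intros HA HB. pose proof (cauchy_schwarz2 A a B b).
  pose proof (pow2_ge_0 A). pose proof (pow2_ge_0 a). pose proof (pow2_ge_0 B). pose proof (pow2_ge_0 b).
  pose proof (sqrt_pos (A ^ 2 + a ^ 2)). pose proof (sqrt_pos (B ^ 2 + b ^ 2)).
  apply Rsqr_incr_0_var; [|lra]. unfold Rsqr.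
  rewrite sqrt_sqrt by (pose proof (pow2_ge_0 (A + B)); pose proof (pow2_ge_0 (a + b)); lra).
  pose proof (sqrt_sqrt (A ^ 2 + a ^ 2) ltac:(lra)). pose proof (sqrt_sqrt (B ^ 2 + b ^ 2) ltac:(lra)).
  nra.
Qed.

Lemma enorm_triangle n a b : enorm n (fun i => a i + b i) <= enorm n a + enorm n b.
Proof.
  induction n.
  - unfold enorm; simpl; rewrite sqrt_0; lra.
  - rewrite !enorm_S. eapply Rle_trans; [|apply minkowski2; apply enorm_nonneg].
    apply sqrt_le_1_alt. pose proof (enorm_nonneg n (fun i => a i + b i)). nra.
Qed.

Lemma enorm_scal n c a : enorm n (fun i => c * a i) = Rabs c * enorm n a.
Proof.
  unfold enorm. rewrite <- (sqrt_Rsqr (Rabs c)) by apply Rabs_pos.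
  rewrite <- sqrt_mult by (try apply Rle_0_sqr; apply sumR_sq_nonneg).
  f_equal. rewrite <- sumR_scal. apply sumR_ext; intros. rewrite <- Rsqr_abs. unfold Rsqr. ring.
Qed.

Lemma abs_cauchy_schwarz n a b : Rabs (sumR n (fun i => a i * b i)) <= enorm n a * enorm n b.
Proof.
  apply Rabs_le. split; [|apply cauchy_schwarz].
  pose proof (cauchy_schwarz n (fun i => -1 * a i) b) as H.
  rewrite enorm_scal in H. replace (Rabs (-1)) with 1 in H by (rewrite Rabs_left; lra).
  rewrite (sumR_ext n _ (fun i => -1 * (a i * b i))), sumR_scal in H by (intros; ring). lra.
Qed.

Lemma enorm_lsum {A} n (l : list A) (F : A -> nat -> R) :
  enorm n (fun i => lsum l (fun p => F p i)) <= lsum l (fun p => enorm n (F p)).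
Proof.
  induction l as [|p l IH]; simpl; [rewrite enorm_zero; lra|].
  eapply Rle_trans; [apply (enorm_triangle n (F p) (fun i => lsum l (fun p => F p i)))|]. lra.
Qed.

Lemma abs_coord_le_enorm n a i : (i < n)%nat -> Rabs (a i) <= enorm n a.
Proof.
  intros H. unfold enorm. rewrite <- sqrt_Rsqr_abs. apply sqrt_le_1_alt.
  rewrite Rsqr_pow2. apply (sumR_term_le n (fun i => a i ^ 2)); auto. intros; nra.
Qed.

Lemma enorm_le_sum_abs n a : enorm n a <= sumR n (fun i => Rabs (a i)).
Proof.
  induction n; [unfold enorm; simpl; rewrite sqrt_0; lra|].
  rewrite enorm_S. simpl sumR. pose proof (enorm_nonneg n a). pose proof (Rabs_pos (a n)).
  assert (0 <= sumR n (fun i => Rabs (a i))) by (apply sumR_nonneg; intros; apply Rabs_pos).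
  apply Rsqr_incr_0_var; [|lra].
  rewrite Rsqr_sqrt by nra. unfold Rsqr. rewrite <- (pow2_abs (a n)). nra.
Qed.

Section Points.
Context {d : nat}.
Implicit Types (x y z : Rd d).

Lemma Rd_of_seq_spec (f : nat -> R) :
  forall i, (d <= i)%nat -> (if Nat.ltb i d then f i else 0) = 0.
Proof. intros i H. destruct (Nat.ltb_spec i d); auto. lia. Qed.

Definition Rd_of_seq (f : nat -> R) : Rd d := exist _ _ (Rd_of_seq_spec f).

Lemma coord_Rd_of_seq f i : (i < d)%nat -> coord (Rd_of_seq f) i = f i.
Proof. intros H. unfold coord, Rd_of_seq; simpl. destruct (Nat.ltb_spec i d); auto; lia. Qed.

Lemma Rd_ext x y : (forall i, (i < d)%nat -> coord x i = coord y i) -> x = y.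
Proof.
  destruct x as [x hx], y as [y hy]. unfold coord; simpl. intros H.
  assert (x = y) as <-.
  { apply functional_extensionality. intros i. destruct (Nat.lt_ge_cases i d).
    - apply H; auto.
    - rewrite hx, hy; auto. }
  f_equal. apply proof_irrelevance.
Qed.

Lemma distRd_enorm x y : distRd x y = enorm d (fun i => coord x i - coord y i).
Proof. reflexivity. Qed.

Lemma distRd_nonneg x y : 0 <= distRd x y.
Proof. apply sqrt_pos. Qed.

Lemma distRd_sym x y : distRd x y = distRd y x.
Proof.
  rewrite !distRd_enorm.
  rewrite <- (Rmult_1_l (enorm d (fun i => coord y i - coord x i))), <- Rabs_R1, <- Rabs_Ropp, <- enorm_scal.
  apply enorm_ext; intros; ring.
Qed.

Lemma distRd_triangle x y z : distRd x z <= distRd x y + distRd y z.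
Proof.
  rewrite !distRd_enorm. eapply Rle_trans; [|apply enorm_triangle].
  right. apply enorm_ext; intros; ring.
Qed.

Lemma distRd_refl x : distRd x x = 0.
Proof. rewrite distRd_enorm, <- (enorm_zero d). apply enorm_ext; intros; ring. Qed.

Lemma abs_coord_sub_le_distRd x y i : (i < d)%nat -> Rabs (coord x i - coord y i) <= distRd x y.
Proof. intros; apply (abs_coord_le_enorm d (fun i => coord x i - coord y i)); auto. Qed.

Lemma distRd_le_sum_abs x y : distRd x y <= sumR d (fun i => Rabs (coord x i - coord y i)).
Proof. apply enorm_le_sum_abs. Qed.

Lemma distRd_eq0 x y : distRd x y = 0 -> x = y.
Proof.
  intros H. apply Rd_ext. intros i Hi.
  pose proof (abs_coord_sub_le_distRd x y i Hi). pose proof (Rabs_pos (coord x i - coord y i)).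
  destruct (Req_dec (coord x i - coord y i) 0); [lra|].
  pose proof (Rabs_pos_lt _ H2). lra.
Qed.

Lemma distRd_pos x y : x <> y -> 0 < distRd x y.
Proof.
  intros H. destruct (distRd_nonneg x y); auto.
  exfalso; apply H; apply distRd_eq0; auto.
Qed.

Lemma open_ball (c : Rd d) (r : R) : open_set (fun y => distRd y c < r).
Proof.
  intros x Hx. exists (r - distRd x c). split; [lra|].
  intros y Hy. pose proof (distRd_triangle y x c). lra.
Qed.

Lemma vnorm_nonneg x : 0 <= vnorm x.
Proof. apply sqrt_pos. Qed.

Lemma vnorm_le_distRd x y : vnorm x <= vnorm y + distRd x y.
Proof.
  unfold vnorm. change (enorm d (coord x) <= enorm d (coord y) + enorm d (fun i => coord x i - coord y i)).
  eapply Rle_trans; [|apply enorm_triangle]. right. apply enorm_ext. intros; ring.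
Qed.

Lemma abs_inner_le x y (g : nat -> R) :
  Rabs (sumR d (fun i => g i * (coord y i - coord x i))) <= enorm d g * distRd y x.
Proof. apply abs_cauchy_schwarz. Qed.

End Points.

Arguments Rd_of_seq : clear implicits.

Lemma list_nat_bound {A : Type} (l : list A) (f : A -> nat) :
  exists M, forall a, In a l -> (f a <= M)%nat.
Proof.
  induction l as [|a l [M HM]]; [exists 0%nat; simpl; tauto|].
  exists (Nat.max (f a) M). intros b [<-|Hb]; [lia|]. specialize (HM b Hb). lia.
Qed.

Lemma archimed_inv_S (e : R) : e > 0 -> exists n : nat, / INR (S n) < e.
Proof.
  intros He. destruct (archimed (/ e)) as [H1 _].
  assert (0 < / e) by (apply Rinv_0_lt_compat; lra).
  exists (Z.to_nat (up (/ e))). rewrite S_INR, INR_IZR_INZ, Z2Nat.id by (apply le_IZR; lra).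
  apply Rlt_le_trans with (/ / e); [|rewrite Rinv_inv; lra].
  apply Rinv_lt_contravar; nra.
Qed.

Lemma inv_S_antimono (n m : nat) : (n <= m)%nat -> / INR (S m) <= / INR (S n).
Proof. intros H. apply Rinv_le_contravar; [apply lt_0_INR; lia | apply le_INR; lia]. Qed.

Section Compact.
Context {d : nat} (K : Rd d -> Prop) (hK : compact_Rd K).

Lemma compact_cluster_point (m : nat -> Rd d) : (forall n, K (m n)) ->
  exists c, K c /\ forall e, e > 0 -> forall N, exists n, (N <= n)%nat /\ distRd (m n) c < e.
Proof.
  intros Hm. apply NNPP. intros Hno.
  set (I := {c : Rd d & {e : R & {N : nat | e > 0 /\ forall n, (N <= n)%nat -> distRd (m n) c >= e}}}).
  destruct (hK I (fun i y => distRd y (projT1 i) < projT1 (projT2 i))) as [l Hl].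
  - intros i; apply open_ball.
  - intros w Kw.
    assert (exists e, e > 0 /\ exists N, forall n, (N <= n)%nat -> distRd (m n) w >= e)
      as [e [He [N HN]]].
    { apply NNPP; intros H. apply Hno. exists w; split; auto. intros e He N.
      apply NNPP; intros H2. apply H. exists e; split; auto. exists N. intros n Hn.
      apply Rnot_lt_ge. intros H3. apply H2. exists n; auto. }
    exists (existT _ w (existT _ e (exist _ N (conj He HN)))). simpl. rewrite distRd_refl; lra.
  - destruct (list_nat_bound l (fun i => proj1_sig (projT2 (projT2 i)))) as [M HM].
    destruct (Hl (m M) (Hm M)) as [i [Hi Ui]]. specialize (HM _ Hi). clear Hi.
    destruct i as [c [e [N [He HN]]]]. simpl in *. specialize (HN M HM). lra.
Qed.

Lemma compact_closed (p : Rd d) : (forall e, e > 0 -> exists w, K w /\ distRd w p < e) -> K p.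
Proof.
  intros H. apply NNPP. intros Hp.
  destruct (hK nat (fun n y => distRd y p > / INR (S n))) as [l Hl].
  - intros n x Hx. exists (distRd x p - / INR (S n)). split; [lra|]. intros y Hy.
    pose proof (distRd_triangle x y p). rewrite (distRd_sym x y) in H0. lra.
  - intros w Kw. assert (w <> p) by (intros ->; auto).
    destruct (archimed_inv_S _ (distRd_pos w p H0)) as [n Hn]. exists n. lra.
  - destruct (list_nat_bound l (fun n => n)) as [M HM].
    assert (/ INR (S M) > 0) by (apply Rinv_0_lt_compat; apply lt_0_INR; lia).
    destruct (H _ H0) as [w [Kw Hw]]. destruct (Hl w Kw) as [n [Hn Un]].
    pose proof (inv_S_antimono n M (HM n Hn)). lra.
Qed.

Lemma compact_bounded (x : Rd d) : exists M, forall w, K w -> distRd w x <= M.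
Proof.
  destruct (hK nat (fun n y => distRd y x < INR n)) as [l Hl].
  - intros n; apply open_ball.
  - intros w _. destruct (archimed (distRd w x)) as [H1 _].
    exists (Z.to_nat (up (distRd w x))). rewrite INR_IZR_INZ, Z2Nat.id; [lra|].
    apply le_IZR. pose proof (distRd_nonneg w x). lra.
  - destruct (list_nat_bound l (fun n => n)) as [M HM]. exists (INR M). intros w Kw.
    destruct (Hl w Kw) as [n [Hn Un]]. specialize (HM n Hn). apply le_INR in HM. lra.
Qed.

Lemma compact_finite_net (e : R) : e > 0 ->
  exists l : list (Rd d), (forall p, In p l -> K p) /\
    forall w, K w -> exists p, In p l /\ distRd w p < e.
Proof.
  intros He. destruct (hK {c : Rd d | K c} (fun i y => distRd y (proj1_sig i) < e)) as [l Hl].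
  - intros i; apply open_ball.
  - intros w Kw. exists (exist _ w Kw). simpl. rewrite distRd_refl; lra.
  - exists (map (@proj1_sig _ _) l). split.
    + intros p Hp. apply in_map_iff in Hp. destruct Hp as [[c Kc] [<- _]]. auto.
    + intros w Kw. destruct (Hl w Kw) as [i [Hi Ui]]. exists (proj1_sig i). split; auto. apply in_map; auto.
Qed.

Lemma compact_continuous_vnorm_bounded (g : Rd d -> Rd d) :
  (forall x, K x -> forall e, e > 0 -> exists delta, delta > 0 /\
      forall y, K y -> distRd y x < delta -> distRd (g y) (g x) < e) ->
  exists M, forall w, K w -> vnorm (g w) <= M.
Proof.
  intros Hc.
  set (I := {p : Rd d & {e : R | K p /\ e > 0 /\
              forall y, K y -> distRd y p < e -> distRd (g y) (g p) < 1}}).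
  destruct (hK I (fun i y => distRd y (projT1 i) < proj1_sig (projT2 i))) as [l Hl].
  - intros i; apply open_ball.
  - intros w Kw. destruct (Hc w Kw 1 ltac:(lra)) as [e [He Hd]].
    exists (existT _ w (exist _ e (conj Kw (conj He Hd)))). simpl. rewrite distRd_refl; lra.
  - exists (lsum l (fun i => vnorm (g (projT1 i)) + 1)). intros w Kw.
    destruct (Hl w Kw) as [i [Hi Ui]].
    assert (vnorm (g (projT1 i)) + 1 <= lsum l (fun i => vnorm (g (projT1 i)) + 1)).
    { apply (lsum_term_le l (fun i => vnorm (g (projT1 i)) + 1)); auto.
      intros; pose proof (vnorm_nonneg (g (projT1 p))); lra. }
    clear Hi. destruct i as [p [e [Kp [He Hd]]]]. simpl in *.
    specialize (Hd w Kw Ui). pose proof (vnorm_le_distRd (g w) (g p)). lra.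
Qed.

End Compact.

Lemma supr_spec (E : R -> Prop) M : (exists r, E r) -> (forall r, E r -> r <= M) -> is_lub E (supr E).
Proof.
  intros Hne Hb. unfold supr. apply epsilon_spec.
  destruct (completeness E) as [m Hm]; [exists M; intros r Hr; auto | auto | exists m; auto].
Qed.

Lemma supr_le (E : R -> Prop) M : (exists r, E r) -> (forall r, E r -> r <= M) -> supr E <= M.
Proof. intros Hne Hb. apply (supr_spec E M Hne Hb). exact Hb. Qed.

Lemma le_supr (E : R -> Prop) M r : (forall r, E r -> r <= M) -> E r -> r <= supr E.
Proof. intros Hb Hr. apply (supr_spec E M (ex_intro _ r Hr) Hb); auto. Qed.

Lemma exists_glb (E : R -> Prop) m : (exists r, E r) -> (forall r, E r -> m <= r) -> exists l, is_glb E l.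
Proof.
  intros [r0 Hr0] Hm. destruct (completeness (fun x => E (- x))) as [l [Hl1 Hl2]].
  - exists (- m). intros x Hx. specialize (Hm _ Hx). lra.
  - exists (- r0). rewrite Ropp_involutive; auto.
  - exists (- l). split.
    + intros r Hr. assert (- r <= l) by (apply Hl1; rewrite Ropp_involutive; auto). lra.
    + intros m' Hm'. assert (l <= - m') by (apply Hl2; intros x Hx; specialize (Hm' _ Hx); lra). lra.
Qed.

Lemma infr_spec (E : R -> Prop) m : (exists r, E r) -> (forall r, E r -> m <= r) -> is_glb E (infr E).
Proof. intros Hne Hm. unfold infr. apply epsilon_spec. apply (exists_glb E m); auto. Qed.

Lemma infr_le (E : R -> Prop) m r : (forall r, E r -> m <= r) -> E r -> infr E <= r.
Proof. intros Hm Hr. apply (infr_spec E m (ex_intro _ r Hr) Hm); auto. Qed.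

(** * Chains *)

Section Chains.
Context {d : nat} (K : Rd d -> Prop).

(* Only the intermediate points [l] are required to lie in [K]. *)
Fixpoint chain (s : R) (u : Rd d) (l : list (Rd d)) (v : Rd d) : Prop :=
  match l with
  | nil => distRd u v < s
  | w :: l' => K w /\ distRd u w < s /\ chain s w l' v
  end.

Fixpoint chain_length (u : Rd d) (l : list (Rd d)) (v : Rd d) : R :=
  match l with
  | nil => distRd u v
  | w :: l' => distRd u w + chain_length w l' v
  end.

Lemma chain_app s u l1 m l2 v :
  chain s u l1 m -> K m -> chain s m l2 v -> chain s u (l1 ++ m :: l2) v.
Proof.
  revert u; induction l1 as [|w l1 IH]; simpl; intros u H1 Km H2; [tauto|].
  destruct H1 as [? [? ?]]. auto.
Qed.

Lemma chain_length_app u l1 m l2 v :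
  chain_length u (l1 ++ m :: l2) v = chain_length u l1 m + chain_length m l2 v.
Proof. revert u; induction l1 as [|w l1 IH]; simpl; intros u; [auto|]. rewrite IH; ring. Qed.

Lemma chain_snoc s u l m v : chain s u l m -> K m -> distRd m v < s -> chain s u (l ++ m :: nil) v.
Proof. intros; apply chain_app; auto. Qed.

Lemma chain_weaken s s' u l v : s <= s' -> chain s u l v -> chain s' u l v.
Proof.
  intros Hs; revert u; induction l as [|w l IH]; simpl; intros u H; [lra|].
  destruct H as [? [? ?]]. repeat split; auto. lra.
Qed.

Lemma distRd_le_chain_length u l v : distRd u v <= chain_length u l v.
Proof.
  revert u; induction l as [|w l IH]; simpl; intros u; [lra|].
  pose proof (IH w). pose proof (distRd_triangle u w v). lra.
Qed.

Lemma chain_length_nonneg u l v : 0 <= chain_length u l v.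
Proof. pose proof (distRd_le_chain_length u l v). pose proof (distRd_nonneg u v). lra. Qed.

Lemma chain_split s u l v : s > 0 -> K u -> K v -> chain s u l v ->
  forall h, 0 <= h <= chain_length u l v ->
  exists l1 m l2, K m /\ chain s u l1 m /\ chain s m l2 v /\
    chain_length u l1 m <= h /\ chain_length m l2 v <= chain_length u l v - h + s.
Proof.
  intros Hs. revert u; induction l as [|w l IH]; simpl; intros u Ku Kv Hc h Hh.
  - destruct (Rlt_le_dec h (distRd u v)).
    + exists nil, u, nil. simpl. rewrite distRd_refl. repeat split; auto; lra.
    + exists nil, v, nil. simpl. rewrite distRd_refl. repeat split; auto; lra.
  - destruct Hc as [Kw [Huw Hc]]. destruct (Rlt_le_dec h (distRd u w)).
    + exists nil, u, (w :: l). simpl. rewrite distRd_refl. repeat split; auto; lra.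
    + destruct (IH w Kw Kv Hc (h - distRd u w)) as [l1 [m [l2 [Km [H1 [H2 [H3 H4]]]]]]]; [lra|].
      exists (w :: l1), m, l2. simpl. repeat split; auto; lra.
Qed.

(* The points reachable by [s]-chains from [x] and the points at distance
   [> s/2] from all of them form two disjoint open sets covering [K]. *)
Lemma chain_exists (hconn : connected_Rd K) x s : K x -> s > 0 ->
  forall v, K v -> exists l, chain s x l v.
Proof.
  intros Kx Hs.
  set (reached := fun w => K w /\ exists l, chain s x l w).
  destruct (hconn (fun y => exists k, reached k /\ distRd y k < s / 2)
                  (fun y => exists r, r > 0 /\ forall k, reached k -> distRd y k >= r + s / 2))
    as [H|H].
  - intros y [k [Rk Hk]]. exists (s / 2 - distRd y k). split; [lra|].
    intros y' Hy'. exists k; split; auto. pose proof (distRd_triangle y' y k). lra.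
  - intros y [r [Hr Hk]]. exists (r / 2). split; [lra|]. intros y' Hy'. exists (r / 2). split; [lra|].
    intros k Rk. specialize (Hk k Rk). pose proof (distRd_triangle y y' k).
    rewrite (distRd_sym y y') in H. lra.
  - intros w Kw. destruct (classic (exists l, chain s x l w)) as [Hw|Hw].
    + left. exists w. split; [split; auto|]. rewrite distRd_refl; lra.
    + right. exists (s / 2). split; [lra|]. intros k [Kk [l Hl]]. apply Rnot_lt_ge. intros Hlt.
      apply Hw. exists (l ++ k :: nil). apply chain_snoc; auto. rewrite distRd_sym. lra.
  - intros w Kw [k [Rk Hk]] [r [Hr Hr2]]. specialize (Hr2 k Rk). lra.
  - intros v Kv. destruct (H v Kv) as [k [[Kk [l Hl]] Hk]].
    exists (l ++ k :: nil). apply chain_snoc; auto. rewrite distRd_sym. lra.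
  - exfalso. destruct (H x Kx) as [r [Hr Hr2]].
    assert (reached x) by (split; auto; exists nil; simpl; rewrite distRd_refl; lra).
    specialize (Hr2 x H0). rewrite distRd_refl in Hr2. lra.
Qed.

Definition chain_dist (s : R) (x v : Rd d) : R :=
  infr (fun r => exists l, chain s x l v /\ r = chain_length x l v).

Section ChainDist.
Hypothesis hconn : connected_Rd K.
Variables (s : R) (x : Rd d).
Hypotheses (Hs : s > 0) (Kx : K x).

Lemma chain_dist_spec v : K v ->
  is_glb (fun r => exists l, chain s x l v /\ r = chain_length x l v) (chain_dist s x v).
Proof.
  intros Kv. apply infr_spec with 0.
  - destruct (chain_exists hconn x s Kx Hs v Kv) as [l Hl]. eauto.
  - intros r [l [_ ->]]. apply chain_length_nonneg.
Qed.

Lemma chain_dist_nonneg v : K v -> 0 <= chain_dist s x v.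
Proof. intros Kv. apply (chain_dist_spec v Kv). intros r [l [_ ->]]. apply chain_length_nonneg. Qed.

Lemma chain_dist_le v l : K v -> chain s x l v -> chain_dist s x v <= chain_length x l v.
Proof. intros Kv Hl. apply (chain_dist_spec v Kv). eauto. Qed.

Lemma chain_dist_approx v e : K v -> e > 0 ->
  exists l, chain s x l v /\ chain_length x l v <= chain_dist s x v + e.
Proof.
  intros Kv He. apply NNPP. intros Hno.
  assert (chain_dist s x v + e <= chain_dist s x v); [|lra].
  apply (chain_dist_spec v Kv). intros r [l [Hl ->]]. apply Rnot_lt_le. intros Hlt.
  apply Hno. exists l; split; auto; lra.
Qed.

Lemma chain_dist_step v v' : K v -> K v' -> distRd v v' < s ->
  chain_dist s x v' <= chain_dist s x v + distRd v v'.
Proof.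
  intros Kv Kv' Hd. apply Rnot_lt_le. intros Hlt.
  destruct (chain_dist_approx v ((chain_dist s x v' - chain_dist s x v - distRd v v') / 2) Kv)
    as [l [Hl Hlen]]; [lra|].
  pose proof (chain_dist_le v' _ Kv' (chain_snoc s x l v v' Hl Kv Hd)).
  rewrite chain_length_app in H. simpl in H. lra.
Qed.

Lemma chain_dist_le_distRd v : K v -> distRd x v < s -> chain_dist s x v <= distRd x v.
Proof. intros Kv Hv. apply (chain_dist_le v nil); auto. Qed.

End ChainDist.

(** * Fine chains *)

Definition fine_chains (u v : Rd d) (L : R) : Prop :=
  forall s, s > 0 -> exists l, chain s u l v /\ chain_length u l v <= L + s.

Lemma distRd_le_of_fine_chains u v L : fine_chains u v L -> distRd u v <= L.
Proof.
  intros H. apply Rnot_lt_le. intros Hlt. destruct (H ((distRd u v - L) / 2)) as [l [_ Hl]]; [lra|].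
  pose proof (distRd_le_chain_length u l v). lra.
Qed.

Lemma approx_midpoint u v L : K u -> K v -> fine_chains u v L -> forall s, s > 0 ->
  exists m, K m /\ exists l1 l2, chain s u l1 m /\ chain s m l2 v /\
    chain_length u l1 m <= L / 2 /\ chain_length m l2 v <= L / 2 + 2 * s.
Proof.
  intros Ku Kv Hr s Hs. pose proof (distRd_le_of_fine_chains u v L Hr) as HL.
  destruct (Hr s Hs) as [l [Hl Hlen]].
  pose proof (distRd_le_chain_length u l v) as Hlv. pose proof (distRd_nonneg u v) as Huv.
  pose proof (Rmin_l (L / 2) (chain_length u l v)) as Hm1.
  pose proof (Rmin_r (L / 2) (chain_length u l v)) as Hm2.
  destruct (chain_split s u l v Hs Ku Kv Hl (Rmin (L / 2) (chain_length u l v)))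
    as [l1 [m [l2 [Km [H1 [H2 [H3 H4]]]]]]].
  { split; [apply Rmin_glb|]; lra. }
  exists m; split; auto. exists l1, l2. repeat split; auto; [lra|].
  unfold Rmin in H4. destruct (Rle_dec (L / 2) (chain_length u l v)); lra.
Qed.

(* A cluster point of approximate midpoints for the scales [1/(n+1)]. *)
Lemma fine_chains_midpoint (hK : compact_Rd K) u v L : K u -> K v -> fine_chains u v L ->
  exists m, K m /\ fine_chains u m (L / 2) /\ fine_chains m v (L / 2).
Proof.
  intros Ku Kv Hr.
  assert (Hinv : forall n, / INR (S n) > 0) by (intros; apply Rinv_0_lt_compat, lt_0_INR; lia).
  destruct (choice _ (fun n => approx_midpoint u v L Ku Kv Hr _ (Hinv n))) as [ms Hms].
  destruct (compact_cluster_point K hK ms (fun n => proj1 (Hms n))) as [c [Kc Hc]].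
  exists c. split; [auto|split]; intros s Hs;
    destruct (archimed_inv_S (s / 4)) as [N HN]; try lra;
    destruct (Hc (s / 4) ltac:(lra) N) as [n [Hn Hd]];
    destruct (Hms n) as [Km [l1 [l2 [H1 [H2 [H3 H4]]]]]];
    pose proof (inv_S_antimono N n Hn).
  - exists (l1 ++ ms n :: nil). split.
    + apply chain_snoc; auto. apply chain_weaken with (/ INR (S n)); auto. lra. lra.
    + rewrite chain_length_app. simpl. lra.
  - exists (ms n :: l2). simpl. rewrite distRd_sym. repeat split; auto; [lra| |lra].
    apply chain_weaken with (/ INR (S n)); auto. lra.
Qed.

End Chains.

Lemma pow2_pos n : 0 < 2 ^ n.
Proof. apply pow_lt; lra. Qed.

Lemma INR_S_le_pow2 n : INR (S n) <= 2 ^ n.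
Proof.
  induction n; [simpl; lra|].
  rewrite !S_INR in *. simpl pow. pose proof (pos_INR n). lra.
Qed.

Lemma div_pow2_nonneg c n : 0 <= c -> 0 <= c / 2 ^ n.
Proof. intros Hc. apply Rmult_le_pos; auto. left; apply Rinv_0_lt_compat, pow2_pos. Qed.

Lemma div_pow2_S c n : c / 2 ^ S n = c / 2 ^ n / 2.
Proof. simpl. field. pose proof (pow2_pos n); lra. Qed.

Lemma exists_div_pow2_lt c e : 0 <= c -> e > 0 -> exists n, c / 2 ^ n < e.
Proof.
  intros Hc He. destruct (archimed_inv_S (e / (c + 1))) as [n Hn]; [apply Rdiv_lt_0_compat; lra|].
  exists n. pose proof (INR_S_le_pow2 n). pose proof (lt_0_INR (S n) ltac:(lia)).
  assert (c / 2 ^ n <= c * / INR (S n)).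
  { unfold Rdiv. apply Rmult_le_compat_l; auto. apply Rinv_le_contravar; lra. }
  assert (c * / INR (S n) <= c * (e / (c + 1))) by (apply Rmult_le_compat_l; lra).
  assert (c * (e / (c + 1)) < e).
  { apply Rmult_lt_reg_r with (c + 1); [lra|]. unfold Rdiv. rewrite Rmult_assoc, (Rmult_assoc e), Rinv_l; lra. }
  lra.
Qed.

Lemma le_of_le_add_div_pow2 a b c : 0 <= c -> (forall n, a <= b + c / 2 ^ n) -> a <= b.
Proof.
  intros Hc H. apply Rnot_lt_le. intros Hlt.
  destruct (exists_div_pow2_lt c (a - b)) as [n Hn]; auto; [lra|]. specialize (H n). lra.
Qed.

(* A limit operator, total thanks to [epsilon]; only meaningful on Cauchy sequences. *)
Definition seq_lim (u : nat -> R) : R := epsilon (inhabits 0) (fun l => Un_cv u l).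

Lemma seq_lim_spec u : Cauchy_crit u -> Un_cv u (seq_lim u).
Proof. intros H. destruct (R_complete u H) as [l Hl]. unfold seq_lim. apply epsilon_spec. eauto. Qed.

Lemma seq_lim_dist_le u n B : Un_cv u (seq_lim u) ->
  (forall m, (n <= m)%nat -> Rabs (u m - u n) <= B) -> Rabs (seq_lim u - u n) <= B.
Proof.
  intros Hl H. apply Rnot_lt_le. intros Hlt.
  destruct (Hl (Rabs (seq_lim u - u n) - B)) as [N HN]; [lra|].
  set (m := Nat.max N n). specialize (HN m ltac:(lia)). specialize (H m ltac:(lia)). unfold R_dist in HN.
  pose proof (Rabs_triang (seq_lim u - u m) (u m - u n)).
  replace (seq_lim u - u m + (u m - u n)) with (seq_lim u - u n) in H0 by ring.
  rewrite Rabs_minus_sym in HN. lra.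
Qed.

(* [dyadic_index t n] is the integer part of [t 2^n], for [t] in [0, 1]. *)
Fixpoint dyadic_index (t : R) (n : nat) : nat :=
  match n with
  | O => O
  | S n' => if Rle_dec (INR (2 * dyadic_index t n' + 1)) (t * 2 ^ S n')
            then (2 * dyadic_index t n' + 1)%nat else (2 * dyadic_index t n')%nat
  end.

Lemma dyadic_index_lt t n : (dyadic_index t n < 2 ^ n)%nat.
Proof. induction n; simpl; [lia|]. destruct (Rle_dec _ _); lia. Qed.

Lemma dyadic_index_spec t n : 0 <= t <= 1 ->
  INR (dyadic_index t n) <= t * 2 ^ n <= INR (dyadic_index t n) + 1.
Proof.
  intros Ht. induction n; [simpl; lra|].
  cbn [dyadic_index]. set (k := dyadic_index t n) in *.
  assert (E1 : INR (2 * k + 1) = 2 * INR k + 1) by (rewrite plus_INR, mult_INR; simpl; ring).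
  assert (E2 : INR (2 * k) = 2 * INR k) by (rewrite mult_INR; simpl; ring).
  replace (t * 2 ^ S n) with (2 * (t * 2 ^ n)) by (simpl; ring).
  destruct (Rle_dec _ _); rewrite ?E1, ?E2 in *; lra.
Qed.

Lemma dyadic_index_0 n : dyadic_index 0 n = 0%nat.
Proof. induction n; simpl; auto. rewrite IHn. destruct (Rle_dec _ _) as [H|H]; auto. simpl in H. lra. Qed.

Section DyadicPath.
Context {d : nat} (K : Rd d -> Prop) (hK : compact_Rd K).

Definition midpoint_of (u v : Rd d) (L : R) : Rd d :=
  epsilon (inhabits u) (fun m => K m /\ fine_chains K u m (L / 2) /\ fine_chains K m v (L / 2)).

Lemma midpoint_of_spec u v L : K u -> K v -> fine_chains K u v L ->
  K (midpoint_of u v L) /\ fine_chains K u (midpoint_of u v L) (L / 2) /\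
  fine_chains K (midpoint_of u v L) v (L / 2).
Proof. intros. unfold midpoint_of. apply epsilon_spec. apply fine_chains_midpoint; auto. Qed.

(* [dyadic_point x z L n k] is the point of level [n] at parameter [k / 2^n]:
   odd indices are midpoints of the two neighbouring points of level [n - 1]. *)
Fixpoint dyadic_point (x z : Rd d) (L : R) (n k : nat) : Rd d :=
  match n with
  | O => match k with O => x | _ => z end
  | S n' => if Nat.even k then dyadic_point x z L n' (Nat.div2 k)
            else midpoint_of (dyadic_point x z L n' (Nat.div2 k))
                   (dyadic_point x z L n' (S (Nat.div2 k))) (L / 2 ^ n')
  end.

Variables (x z : Rd d) (L : R).
Hypotheses (Kx : K x) (Kz : K z) (Hxz : fine_chains K x z L).

Local Notation G := (dyadic_point x z L).

Lemma fine_chains_length_nonneg : 0 <= L.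
Proof. pose proof (distRd_le_of_fine_chains K x z L Hxz). pose proof (distRd_nonneg x z). lra. Qed.

Lemma dyadic_point_S n k : G (S n) k =
  if Nat.even k then G n (Nat.div2 k)
  else midpoint_of (G n (Nat.div2 k)) (G n (S (Nat.div2 k))) (L / 2 ^ n).
Proof. reflexivity. Qed.

Lemma dyadic_point_even n j : G (S n) (2 * j) = G n j.
Proof. rewrite dyadic_point_S, Nat.even_even, Nat.div2_double. auto. Qed.

Lemma dyadic_point_odd n j : G (S n) (S (2 * j)) = midpoint_of (G n j) (G n (S j)) (L / 2 ^ n).
Proof.
  rewrite dyadic_point_S. replace (S (2 * j)) with (2 * j + 1)%nat by lia. rewrite Nat.even_odd, Nat.div2_odd'. auto.
Qed.

Lemma dyadic_point_0 n : G n 0 = x.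
Proof. induction n; auto. Qed.

Lemma dyadic_point_last n : G n (2 ^ n) = z.
Proof. induction n; auto. simpl Nat.pow. replace (2 ^ n + (2 ^ n + 0))%nat with (2 * 2 ^ n)%nat by lia. rewrite dyadic_point_even. auto. Qed.

Lemma dyadic_point_adjacent n k : (k < 2 ^ n)%nat ->
  K (G n k) /\ K (G n (S k)) /\ fine_chains K (G n k) (G n (S k)) (L / 2 ^ n).
Proof.
  revert k; induction n; intros k Hk.
  - simpl in Hk. assert (k = 0%nat) by lia. subst. simpl. rewrite Rdiv_1_r. auto.
  - rewrite div_pow2_S.
    destruct (Nat.Even_or_Odd k) as [[j ->]|[j ->]];
      (assert (Hj : (j < 2 ^ n)%nat) by (simpl in Hk; lia));
      destruct (IHn j Hj) as [K1 [K2 R1]];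
      destruct (midpoint_of_spec _ _ _ K1 K2 R1) as [? [? ?]].
    + rewrite dyadic_point_even, dyadic_point_odd. auto.
    + replace (2 * j + 1)%nat with (S (2 * j)) by lia. replace (S (S (2 * j))) with (2 * S j)%nat by lia.
      rewrite dyadic_point_even, dyadic_point_odd. auto.
Qed.

Lemma distRd_dyadic_point_le n j k : (j <= k)%nat -> (k <= 2 ^ n)%nat ->
  distRd (G n j) (G n k) <= L / 2 ^ n * INR (k - j).
Proof.
  intros Hjk. induction k; intros Hk.
  - assert (j = 0%nat) by lia. subst. rewrite distRd_refl. simpl. lra.
  - destruct (Nat.eq_dec j (S k)) as [->|Hne]; [rewrite distRd_refl, Nat.sub_diag; simpl; lra|].
    assert (IH : distRd (G n j) (G n k) <= L / 2 ^ n * INR (k - j)) by (apply IHk; lia).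
    destruct (dyadic_point_adjacent n k ltac:(lia)) as [_ [_ Rk]].
    pose proof (distRd_le_of_fine_chains _ _ _ _ Rk).
    pose proof (distRd_triangle (G n j) (G n k) (G n (S k))).
    replace (S k - j)%nat with (S (k - j)) by lia. rewrite S_INR. lra.
Qed.

Lemma distRd_dyadic_point_le_abs n j k : (j <= 2 ^ n)%nat -> (k <= 2 ^ n)%nat ->
  distRd (G n j) (G n k) <= L / 2 ^ n * Rabs (INR j - INR k).
Proof.
  intros Hj Hk. destruct (Nat.le_ge_cases j k) as [H|H]; pose proof (le_INR _ _ H).
  - rewrite Rabs_left1, Ropp_minus_distr, <- minus_INR by (auto; lra).
    apply distRd_dyadic_point_le; auto.
  - rewrite distRd_sym, Rabs_right, <- minus_INR by (auto; lra).
    apply distRd_dyadic_point_le; auto.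
Qed.

Definition dyadic_approx (n : nat) (t : R) : Rd d := G n (dyadic_index t n).

Lemma dyadic_approx_step n t : distRd (dyadic_approx n t) (dyadic_approx (S n) t) <= L / 2 ^ S n.
Proof.
  pose proof fine_chains_length_nonneg.
  unfold dyadic_approx. simpl dyadic_index. set (k := dyadic_index t n).
  pose proof (dyadic_index_lt t n). fold k in H0.
  destruct (Rle_dec _ _).
  - replace (k + (k + 0) + 1)%nat with (S (2 * k)) by lia. rewrite <- (dyadic_point_even n k).
    destruct (dyadic_point_adjacent (S n) (2 * k)) as [_ [_ R1]]; [simpl; lia|].
    apply (distRd_le_of_fine_chains _ _ _ _ R1).
  - replace (k + (k + 0))%nat with (2 * k)%nat by lia.
    rewrite dyadic_point_even, distRd_refl. apply div_pow2_nonneg; auto.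
Qed.

Lemma dyadic_approx_tail n m t : (n <= m)%nat ->
  distRd (dyadic_approx m t) (dyadic_approx n t) <= L / 2 ^ n - L / 2 ^ m.
Proof.
  intros Hnm. induction m.
  - assert (n = 0%nat) by lia. subst. rewrite distRd_refl. lra.
  - destruct (Nat.eq_dec n (S m)) as [->|Hne]; [rewrite distRd_refl; lra|].
    specialize (IHm ltac:(lia)). pose proof (dyadic_approx_step m t).
    pose proof (distRd_triangle (dyadic_approx (S m) t) (dyadic_approx m t) (dyadic_approx n t)).
    rewrite (distRd_sym (dyadic_approx (S m) t) (dyadic_approx m t)) in H0.
    rewrite div_pow2_S in *. lra.
Qed.

Lemma dyadic_approx_tail_le n m t : (n <= m)%nat ->
  distRd (dyadic_approx m t) (dyadic_approx n t) <= L / 2 ^ n.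
Proof.
  intros Hnm. pose proof (dyadic_approx_tail n m t Hnm).
  pose proof (div_pow2_nonneg L m fine_chains_length_nonneg). lra.
Qed.

Lemma dyadic_approx_coord_cauchy t i : (i < d)%nat -> Cauchy_crit (fun n => coord (dyadic_approx n t) i).
Proof.
  intros Hi e He. destruct (exists_div_pow2_lt L (e / 2)) as [N HN]; [apply fine_chains_length_nonneg|lra|].
  exists N. intros n m Hn Hm. unfold R_dist.
  pose proof (abs_coord_sub_le_distRd (dyadic_approx n t) (dyadic_approx N t) i Hi).
  pose proof (abs_coord_sub_le_distRd (dyadic_approx m t) (dyadic_approx N t) i Hi).
  pose proof (dyadic_approx_tail_le N n t Hn). pose proof (dyadic_approx_tail_le N m t Hm).
  pose proof (Rabs_triang (coord (dyadic_approx n t) i - coord (dyadic_approx N t) i)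
                          (coord (dyadic_approx N t) i - coord (dyadic_approx m t) i)).
  rewrite (Rabs_minus_sym (coord (dyadic_approx N t) i)) in H3.
  replace (coord (dyadic_approx n t) i - coord (dyadic_approx N t) i +
           (coord (dyadic_approx N t) i - coord (dyadic_approx m t) i))
    with (coord (dyadic_approx n t) i - coord (dyadic_approx m t) i) in H3 by ring.
  lra.
Qed.

Definition dyadic_path (t : R) : Rd d :=
  Rd_of_seq d (fun i => seq_lim (fun n => coord (dyadic_approx n t) i)).

Lemma dyadic_path_close n t : distRd (dyadic_path t) (dyadic_approx n t) <= INR d * (L / 2 ^ n).
Proof.
  eapply Rle_trans; [apply distRd_le_sum_abs|]. rewrite <- sumR_const. apply sumR_le.
  intros i Hi. unfold dyadic_path. rewrite coord_Rd_of_seq by auto.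
  apply (seq_lim_dist_le (fun m => coord (dyadic_approx m t) i)); [apply seq_lim_spec, dyadic_approx_coord_cauchy; auto|].
  intros m Hm. eapply Rle_trans; [apply abs_coord_sub_le_distRd; auto|].
  apply dyadic_approx_tail_le; auto.
Qed.

Lemma dyadic_path_lipschitz s t : 0 <= s <= 1 -> 0 <= t <= 1 ->
  distRd (dyadic_path s) (dyadic_path t) <= L * Rabs (s - t).
Proof.
  intros Hs Ht. pose proof fine_chains_length_nonneg as HL.
  apply (le_of_le_add_div_pow2 _ _ ((2 * INR d + 1) * L)); [pose proof (pos_INR d); nra|].
  intros n. pose proof (dyadic_path_close n s). pose proof (dyadic_path_close n t).
  pose proof (distRd_triangle (dyadic_path s) (dyadic_approx n s) (dyadic_path t)).
  pose proof (distRd_triangle (dyadic_approx n s) (dyadic_approx n t) (dyadic_path t)).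
  rewrite (distRd_sym (dyadic_approx n t)) in H2.
  assert (distRd (dyadic_approx n s) (dyadic_approx n t) <=
          L / 2 ^ n * Rabs (INR (dyadic_index s n) - INR (dyadic_index t n))).
  { apply distRd_dyadic_point_le_abs; pose proof (dyadic_index_lt s n); pose proof (dyadic_index_lt t n); lia. }
  pose proof (dyadic_index_spec s n Hs). pose proof (dyadic_index_spec t n Ht). pose proof (pow2_pos n).
  assert (Hidx : Rabs (INR (dyadic_index s n) - INR (dyadic_index t n)) <= Rabs (s - t) * 2 ^ n + 1).
  { rewrite <- (Rabs_right (2 ^ n)) by lra. rewrite <- Rabs_mult, Rmult_minus_distr_r.
    unfold Rabs. repeat destruct Rcase_abs; lra. }
  assert (L / 2 ^ n * Rabs (INR (dyadic_index s n) - INR (dyadic_index t n)) <= L * Rabs (s - t) + L / 2 ^ n).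
  { eapply Rle_trans; [apply Rmult_le_compat_l; [apply div_pow2_nonneg; auto|apply Hidx]|].
    right. field. lra. }
  assert ((2 * INR d + 1) * L / 2 ^ n = 2 * (INR d * (L / 2 ^ n)) + L / 2 ^ n) by (field; lra).
  lra.
Qed.

Lemma dyadic_path_0 : dyadic_path 0 = x.
Proof.
  apply Rd_ext. intros i Hi. unfold dyadic_path. rewrite coord_Rd_of_seq by auto.
  assert (Hc : forall n, coord (dyadic_approx n 0) i = coord x i).
  { intros n. unfold dyadic_approx. rewrite dyadic_index_0, dyadic_point_0. auto. }
  apply UL_sequence with (fun n => coord (dyadic_approx n 0) i).
  - apply seq_lim_spec, dyadic_approx_coord_cauchy; auto.
  - intros e He. exists 0%nat. intros n _. rewrite Hc. unfold R_dist. rewrite Rminus_diag, Rabs_R0. lra.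
Qed.

Lemma dyadic_path_1 : dyadic_path 1 = z.
Proof.
  pose proof fine_chains_length_nonneg as HL.
  apply distRd_eq0, Rle_antisym; [|apply distRd_nonneg].
  apply (le_of_le_add_div_pow2 _ _ ((INR d + 1) * L)); [pose proof (pos_INR d); nra|].
  intros n. pose proof (dyadic_path_close n 1).
  assert (distRd (dyadic_approx n 1) z <= L / 2 ^ n).
  { unfold dyadic_approx. rewrite <- (dyadic_point_last n) at 2.
    eapply Rle_trans; [apply distRd_dyadic_point_le_abs; pose proof (dyadic_index_lt 1 n); lia|].
    rewrite <- (Rmult_1_r (L / 2 ^ n)) at 2. apply Rmult_le_compat_l; [apply div_pow2_nonneg; auto|].
    pose proof (dyadic_index_spec 1 n ltac:(lra)). rewrite pow_INR. replace (INR 2) with 2 by reflexivity.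
    rewrite Rabs_left1; lra. }
  pose proof (distRd_triangle (dyadic_path 1) (dyadic_approx n 1) z).
  assert ((INR d + 1) * L / 2 ^ n = INR d * (L / 2 ^ n) + L / 2 ^ n) by (field; pose proof (pow2_pos n); lra).
  lra.
Qed.

Lemma dyadic_path_in_K t : K (dyadic_path t).
Proof.
  apply (compact_closed K hK). intros e He.
  destruct (exists_div_pow2_lt (INR d * L) e) as [n Hn]; auto.
  { pose proof (pos_INR d); pose proof fine_chains_length_nonneg; nra. }
  exists (dyadic_approx n t). split.
  - apply (dyadic_point_adjacent n (dyadic_index t n) (dyadic_index_lt t n)).
  - rewrite distRd_sym. pose proof (dyadic_path_close n t).
    assert (INR d * L / 2 ^ n = INR d * (L / 2 ^ n)) by (field; pose proof (pow2_pos n); lra). lra.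
Qed.

End DyadicPath.

Lemma partition_mono a b n (t : nat -> R) : partition a b n t ->
  forall j k, (j <= k)%nat -> (k <= n)%nat -> t j <= t k.
Proof.
  intros [_ [_ H]] j k Hjk. induction k; intros Hk.
  - assert (j = 0%nat) by lia; subst; lra.
  - destruct (Nat.eq_dec j (S k)) as [->|Hne]; [lra|].
    specialize (IHk ltac:(lia) ltac:(lia)). pose proof (H k ltac:(lia)). lra.
Qed.

Section LipschitzPath.
Context {d : nat} (K : Rd d -> Prop) (g : R -> Rd d) (a b L : R).
Hypotheses (Hab : a <= b) (HL : 0 <= L)
  (Hlip : forall s t, a <= s <= b -> a <= t <= b -> distRd (g s) (g t) <= L * Rabs (s - t)).

Lemma poly_length_le_lipschitz n t : partition a b n t -> poly_length g n t <= L * (b - a).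
Proof.
  intros Hp. pose proof (partition_mono _ _ _ _ Hp) as Hm. destruct Hp as [H0 [H1 H2]].
  assert (forall m, (m <= n)%nat ->
            sumR m (fun j => distRd (g (t (S j))) (g (t j))) <= L * (t m - t 0%nat)).
  { induction m; intros Hmn; simpl; [lra|]. specialize (IHm ltac:(lia)).
    assert (Htm : a <= t m <= b) by (rewrite <- H0, <- H1; split; apply Hm; lia).
    assert (HtSm : a <= t (S m) <= b) by (rewrite <- H0, <- H1; split; apply Hm; lia).
    pose proof (Hlip (t (S m)) (t m) HtSm Htm) as Hstep. pose proof (H2 m ltac:(lia)).
    rewrite Rabs_right in Hstep by lra. nra. }
  unfold poly_length. specialize (H n (le_n n)). rewrite H0, H1 in H. lra.
Qed.

Lemma lipschitz_path_rectifiable : (forall t, a <= t <= b -> K (g t)) ->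
  path_in K g a b /\ rectifiable g a b /\ path_length g a b <= L * (b - a).
Proof.
  intros HK. split; [|split].
  - split; [lra|]. split; auto.
    intros t Ht e He. exists (e / (L + 1)). split; [apply Rdiv_lt_0_compat; lra|].
    intros s Hs Hst. eapply Rle_lt_trans; [apply Hlip; auto|].
    apply Rle_lt_trans with ((L + 1) * Rabs (s - t)); [pose proof (Rabs_pos (s - t)); nra|].
    apply Rmult_lt_reg_r with (/ (L + 1)); [apply Rinv_0_lt_compat; lra|].
    rewrite Rmult_comm, <- Rmult_assoc, Rinv_l, Rmult_1_l; [auto|lra].
  - exists (L * (b - a)). intros r [n [t [Hp ->]]]. apply poly_length_le_lipschitz; auto.
  - unfold path_length. apply supr_le.
    + exists (poly_length g 1 (fun j => match j with O => a | _ => b end)).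
      exists 1%nat, (fun j => match j with O => a | _ => b end). repeat split; auto.
      intros j Hj. assert (j = 0%nat) by lia. subst. lra.
    + intros r [n [t [Hp ->]]]. apply poly_length_le_lipschitz; auto.
Qed.

End LipschitzPath.

Lemma fine_chains_rectifiable_path {d} (K : Rd d -> Prop) (hK : compact_Rd K) x z L :
  K x -> K z -> fine_chains K x z L ->
  exists (gamma : R -> Rd d) (a b : R), path_in K gamma a b /\ gamma a = x /\ gamma b = z /\
    rectifiable gamma a b /\ path_length gamma a b <= L.
Proof.
  intros Kx Kz Hxz. pose proof (fine_chains_length_nonneg K x z L Hxz) as HL.
  destruct (lipschitz_path_rectifiable K (dyadic_path K x z L) 0 1 L ltac:(lra) HL)
    as [Hpath [Hrect Hlen]].
  - intros s t Hs Ht. apply dyadic_path_lipschitz; auto.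
  - intros t _. apply dyadic_path_in_K; auto.
  - exists (dyadic_path K x z L), 0, 1. rewrite Rminus_0_r, Rmult_1_r in Hlen.
    repeat split; auto using dyadic_path_0, dyadic_path_1; apply Hpath.
Qed.

(** * Differential calculus on R^d *)

Section Calculus.
Context {d : nat}.
Implicit Types (F G : Rd d -> R) (w y : Rd d) (g h : nat -> R).

Definition has_grad F g w : Prop :=
  forall e, e > 0 -> exists del, del > 0 /\ forall y, distRd y w < del ->
    Rabs (F y - F w - sumR d (fun i => g i * (coord y i - coord w i))) <= e * distRd y w.

Definition cont_at F w : Prop :=
  forall e, e > 0 -> exists del, del > 0 /\ forall y, distRd y w < del -> Rabs (F y - F w) < e.

Lemma has_grad_locally_lipschitz F g w : has_grad F g w ->
  exists del, del > 0 /\ forall y, distRd y w < del -> Rabs (F y - F w) <= (enorm d g + 1) * distRd y w.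
Proof.
  intros H. destruct (H 1 ltac:(lra)) as [del [Hdel Hd]]. exists del; split; auto. intros y Hy.
  specialize (Hd y Hy). pose proof (abs_inner_le w y g).
  pose proof (Rabs_triang (F y - F w - sumR d (fun i => g i * (coord y i - coord w i)))
                          (sumR d (fun i => g i * (coord y i - coord w i)))).
  rewrite Rplus_comm, Rplus_minus in H1. lra.
Qed.

Lemma has_grad_cont F g w : has_grad F g w -> cont_at F w.
Proof.
  intros H e He. destruct (has_grad_locally_lipschitz F g w H) as [del [Hdel Hd]].
  set (c := enorm d g + 1) in *. assert (Hc : c > 0) by (pose proof (enorm_nonneg d g); unfold c; lra).
  exists (Rmin del (e / (c + 1))). split; [apply Rmin_pos; auto; apply Rdiv_lt_0_compat; lra|].
  intros y Hy. pose proof (Rmin_l del (e / (c + 1))). pose proof (Rmin_r del (e / (c + 1))).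
  specialize (Hd y ltac:(lra)). pose proof (distRd_nonneg y w).
  assert (c * distRd y w < e); [|lra].
  apply Rle_lt_trans with ((c + 1) * distRd y w); [nra|].
  apply Rmult_lt_reg_r with (/ (c + 1)); [apply Rinv_0_lt_compat; lra|].
  rewrite Rmult_comm, <- Rmult_assoc, Rinv_l, Rmult_1_l by lra. lra.
Qed.

Lemma has_grad_ext F F' g g' w : (forall y, F y = F' y) -> (forall i, (i < d)%nat -> g i = g' i) ->
  has_grad F g w -> has_grad F' g' w.
Proof.
  intros HF Hg H e He. destruct (H e He) as [del [Hdel Hd]]. exists del; split; auto. intros y Hy.
  rewrite <- !HF, <- (sumR_ext d (fun i => g i * (coord y i - coord w i))) by (intros; rewrite Hg; auto).
  auto.
Qed.

Lemma has_grad_const (c : R) w : has_grad (fun _ => c) (fun _ => 0) w.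
Proof.
  intros e He. exists 1; split; [lra|]. intros y _.
  rewrite (sumR_ext d _ (fun _ => 0)), sumR_const by (intros; ring).
  replace (c - c - INR d * 0) with 0 by ring. rewrite Rabs_R0.
  pose proof (distRd_nonneg y w). nra.
Qed.

Lemma has_grad_plus F G g h w : has_grad F g w -> has_grad G h w ->
  has_grad (fun y => F y + G y) (fun i => g i + h i) w.
Proof.
  intros H1 H2 e He.
  destruct (H1 (e / 2) ltac:(lra)) as [d1 [Hd1 P1]]. destruct (H2 (e / 2) ltac:(lra)) as [d2 [Hd2 P2]].
  exists (Rmin d1 d2). split; [apply Rmin_pos; auto|]. intros y Hy.
  specialize (P1 y (Rlt_le_trans _ _ _ Hy (Rmin_l _ _))). specialize (P2 y (Rlt_le_trans _ _ _ Hy (Rmin_r _ _))).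
  rewrite (sumR_ext d _ (fun i => g i * (coord y i - coord w i) + h i * (coord y i - coord w i)))
    by (intros; ring).
  rewrite sumR_plus.
  match goal with |- Rabs ?X <= _ =>
    replace X with ((F y - F w - sumR d (fun i => g i * (coord y i - coord w i))) +
                    (G y - G w - sumR d (fun i => h i * (coord y i - coord w i)))) by ring end.
  eapply Rle_trans; [apply Rabs_triang|]. lra.
Qed.

Lemma has_grad_lsum {A : Type} (l : list A) (F : A -> Rd d -> R) (g : A -> nat -> R) w :
  (forall p, In p l -> has_grad (F p) (g p) w) ->
  has_grad (fun y => lsum l (fun p => F p y)) (fun i => lsum l (fun p => g p i)) w.
Proof.
  induction l as [|p l IH]; intros H; simpl; [apply has_grad_const|].
  apply (has_grad_plus (F p) (fun y => lsum l (fun p => F p y)) (g p) (fun i => lsum l (fun p => g p i))).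
  - apply H; simpl; auto.
  - apply IH. intros; apply H; simpl; auto.
Qed.

Lemma has_grad_comp F g w (phi : R -> R) l : derivable_pt_lim phi (F w) l -> has_grad F g w ->
  has_grad (fun y => phi (F y)) (fun i => l * g i) w.
Proof.
  intros Hphi HF e He.
  destruct (has_grad_locally_lipschitz F g w HF) as [d1 [Hd1 Lip]].
  set (c := enorm d g + 1). assert (Hc : c > 0) by (pose proof (enorm_nonneg d g); unfold c; lra).
  pose proof (Rabs_pos l).
  destruct (Hphi (e / (2 * c))) as [[d2 Hd2] Hp]; [apply Rdiv_lt_0_compat; lra|]. simpl in Hp.
  destruct (HF (e / (2 * (Rabs l + 1)))) as [d3 [Hd3 P3]]; [apply Rdiv_lt_0_compat; lra|].
  exists (Rmin d1 (Rmin (d2 / c) d3)). split; [repeat apply Rmin_pos; auto; apply Rdiv_lt_0_compat; auto|].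
  intros y Hy. pose proof (Rmin_l d1 (Rmin (d2 / c) d3)). pose proof (Rmin_r d1 (Rmin (d2 / c) d3)).
  pose proof (Rmin_l (d2 / c) d3). pose proof (Rmin_r (d2 / c) d3).
  specialize (Lip y ltac:(lra)). specialize (P3 y ltac:(lra)). pose proof (distRd_nonneg y w).
  set (h := F y - F w) in *. set (lin := sumR d (fun i => g i * (coord y i - coord w i))) in *.
  assert (Houter : Rabs (phi (F y) - phi (F w) - l * h) <= e / 2 * distRd y w).
  { apply Rle_trans with (e / (2 * c) * Rabs h).
    - destruct (Req_dec h 0) as [h0|h0].
      + replace (F y) with (F w) by (unfold h in h0; lra). rewrite h0.
        replace (phi (F w) - phi (F w) - l * 0) with 0 by ring. rewrite Rabs_R0, Rmult_0_r. lra.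
      + assert (Hh : Rabs h < d2).
        { apply Rle_lt_trans with (c * distRd y w); auto.
          apply Rmult_lt_reg_r with (/ c); [apply Rinv_0_lt_compat; lra|].
          rewrite Rmult_comm, <- Rmult_assoc, Rinv_l, Rmult_1_l by lra. lra. }
        specialize (Hp h h0 Hh). replace (F w + h) with (F y) in Hp by (unfold h; ring).
        replace (phi (F y) - phi (F w) - l * h) with (((phi (F y) - phi (F w)) / h - l) * h) by (field; auto).
        rewrite Rabs_mult. apply Rmult_le_compat_r; [apply Rabs_pos|lra].
    - apply Rle_trans with (e / (2 * c) * (c * distRd y w)).
      + apply Rmult_le_compat_l; auto. left; apply Rdiv_lt_0_compat; lra.
      + right; field; lra. }
  assert (Hinner : Rabs l * Rabs (h - lin) <= e / 2 * distRd y w).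
  { apply Rle_trans with (Rabs l * (e / (2 * (Rabs l + 1)) * distRd y w)).
    - apply Rmult_le_compat_l; auto.
    - apply Rle_trans with ((Rabs l / (Rabs l + 1)) * (e / 2 * distRd y w)); [right; field; lra|].
      rewrite <- (Rmult_1_l (e / 2 * distRd y w)) at 2. apply Rmult_le_compat_r; [nra|].
      apply Rmult_le_reg_r with (Rabs l + 1); [lra|]. unfold Rdiv. rewrite Rmult_assoc, Rinv_l; lra. }
  rewrite (sumR_ext d _ (fun i => l * (g i * (coord y i - coord w i)))), sumR_scal by (intros; ring).
  fold lin.
  replace (phi (F y) - phi (F w) - l * lin) with ((phi (F y) - phi (F w) - l * h) + l * (h - lin)) by ring.
  eapply Rle_trans; [apply Rabs_triang|]. rewrite Rabs_mult. lra.
Qed.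

Definition sqdist (y p : Rd d) : R := sumR d (fun i => (coord y i - coord p i) ^ 2).

Lemma sqdist_eq (y p : Rd d) : sqdist y p = distRd y p ^ 2.
Proof. unfold sqdist, distRd. rewrite <- Rsqr_pow2, Rsqr_sqrt by apply sumR_sq_nonneg. auto. Qed.

Lemma has_grad_sqdist (p w : Rd d) : has_grad (fun y => sqdist y p) (fun i => 2 * (coord w i - coord p i)) w.
Proof.
  intros e He. exists e; split; auto. intros y Hy.
  replace (sqdist y p - sqdist w p - sumR d (fun i => 2 * (coord w i - coord p i) * (coord y i - coord w i)))
    with (sqdist y w).
  - rewrite sqdist_eq. pose proof (distRd_nonneg y w). rewrite Rabs_right by nra. nra.
  - unfold sqdist. rewrite <- !sumR_minus. apply sumR_ext; intros; ring.
Qed.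

Lemma cont_at_const (c : R) w : cont_at (fun _ => c) w.
Proof. intros e He. exists 1. split; [lra|]. intros. rewrite Rminus_diag, Rabs_R0. auto. Qed.

Lemma cont_at_coord i w : (i < d)%nat -> cont_at (fun y => coord y i) w.
Proof.
  intros Hi e He. exists e; split; auto. intros y Hy.
  eapply Rle_lt_trans; [apply abs_coord_sub_le_distRd; auto|auto].
Qed.

Lemma cont_at_plus F G w : cont_at F w -> cont_at G w -> cont_at (fun y => F y + G y) w.
Proof.
  intros H1 H2 e He.
  destruct (H1 (e / 2) ltac:(lra)) as [d1 [Hd1 P1]]. destruct (H2 (e / 2) ltac:(lra)) as [d2 [Hd2 P2]].
  exists (Rmin d1 d2). split; [apply Rmin_pos; auto|]. intros y Hy.
  specialize (P1 y (Rlt_le_trans _ _ _ Hy (Rmin_l _ _))). specialize (P2 y (Rlt_le_trans _ _ _ Hy (Rmin_r _ _))).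
  replace (F y + G y - (F w + G w)) with ((F y - F w) + (G y - G w)) by ring.
  eapply Rle_lt_trans; [apply Rabs_triang|]. lra.
Qed.

Lemma cont_at_mult F G w : cont_at F w -> cont_at G w -> cont_at (fun y => F y * G y) w.
Proof.
  intros H1 H2 e He. pose proof (Rabs_pos (F w)). pose proof (Rabs_pos (G w)).
  set (eF := Rmin 1 (e / (2 * (Rabs (G w) + 1)))).
  assert (HeF : eF > 0) by (apply Rmin_pos; [lra|apply Rdiv_lt_0_compat; lra]).
  destruct (H1 eF HeF) as [d1 [Hd1 P1]].
  destruct (H2 (e / (2 * (Rabs (F w) + 1)))) as [d2 [Hd2 P2]]; [apply Rdiv_lt_0_compat; lra|].
  exists (Rmin d1 d2). split; [apply Rmin_pos; auto|]. intros y Hy.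
  specialize (P1 y (Rlt_le_trans _ _ _ Hy (Rmin_l _ _))). specialize (P2 y (Rlt_le_trans _ _ _ Hy (Rmin_r _ _))).
  pose proof (Rmin_l 1 (e / (2 * (Rabs (G w) + 1)))). pose proof (Rmin_r 1 (e / (2 * (Rabs (G w) + 1)))).
  replace (F y * G y - F w * G w) with (F y * (G y - G w) + (F y - F w) * G w) by ring.
  eapply Rle_lt_trans; [apply Rabs_triang|]. rewrite !Rabs_mult.
  assert (Rabs (F y) <= Rabs (F w) + 1).
  { pose proof (Rabs_triang (F y - F w) (F w)). rewrite Rplus_comm, Rplus_minus in H5. unfold eF in *. lra. }
  assert (Rabs (F y) * Rabs (G y - G w) < e / 2).
  { apply Rle_lt_trans with ((Rabs (F w) + 1) * Rabs (G y - G w)); [apply Rmult_le_compat_r; auto; apply Rabs_pos|].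
    replace (e / 2) with ((Rabs (F w) + 1) * (e / (2 * (Rabs (F w) + 1)))) by (field; lra).
    apply Rmult_lt_compat_l; lra. }
  assert (Rabs (F y - F w) * Rabs (G w) <= e / 2).
  { replace (e / 2) with ((e / (2 * (Rabs (G w) + 1))) * (Rabs (G w) + 1)) by (field; lra).
    apply Rmult_le_compat; try apply Rabs_pos; unfold eF in *; lra. }
  lra.
Qed.

Lemma cont_at_inv F w : F w > 0 -> cont_at F w -> cont_at (fun y => / F y) w.
Proof.
  intros Hp H e He.
  destruct (H (Rmin (F w / 2) (e * F w * F w / 2))) as [d1 [Hd1 P1]].
  { apply Rmin_pos; [lra|]. apply Rdiv_lt_0_compat; [|lra]. apply Rmult_lt_0_compat; [apply Rmult_lt_0_compat|]; lra. }
  exists d1; split; auto. intros y Hy. specialize (P1 y Hy).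
  pose proof (Rmin_l (F w / 2) (e * F w * F w / 2)). pose proof (Rmin_r (F w / 2) (e * F w * F w / 2)).
  assert (F y > F w / 2) by (apply Rabs_def2 in P1; lra).
  replace (/ F y - / F w) with ((F w - F y) / (F y * F w)) by (field; lra).
  unfold Rdiv. rewrite Rabs_mult, Rabs_inv, (Rabs_right (F y * F w)) by nra.
  apply Rmult_lt_reg_r with (F y * F w); [nra|].
  rewrite Rmult_assoc, Rinv_l, Rmult_1_r by nra. rewrite Rabs_minus_sym.
  apply Rlt_le_trans with (e * F w * F w / 2); [lra|].
  assert (F w * F w / 2 <= F y * F w) by nra. nra.
Qed.

Lemma cont_at_lsum {A : Type} (l : list A) (F : A -> Rd d -> R) w :
  (forall p, In p l -> cont_at (F p) w) -> cont_at (fun y => lsum l (fun p => F p y)) w.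
Proof.
  induction l as [|p l IH]; intros H; simpl; [apply cont_at_const|].
  apply (cont_at_plus (F p) (fun y => lsum l (fun p => F p y))).
  - apply H; simpl; auto.
  - apply IH; intros; apply H; simpl; auto.
Qed.

Lemma cont_at_ext F F' w : (forall y, F y = F' y) -> cont_at F w -> cont_at F' w.
Proof. intros HF H e He. destruct (H e He) as [del [Hd P]]. exists del; split; auto. intros; rewrite <- !HF; auto. Qed.

Lemma cont_at_Rd_of_seq (G : Rd d -> nat -> R) w :
  (forall i, (i < d)%nat -> cont_at (fun y => G y i) w) ->
  forall e, e > 0 -> exists del, del > 0 /\
    forall y, distRd y w < del -> distRd (Rd_of_seq d (G y)) (Rd_of_seq d (G w)) < e.
Proof.
  intros HG e He. pose proof (pos_INR d). set (eta := e / (INR d + 1)).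
  assert (Heta : eta > 0) by (unfold eta; apply Rdiv_lt_0_compat; lra).
  assert (Hn : forall n, (n <= d)%nat -> exists del, del > 0 /\ forall y, distRd y w < del ->
     sumR n (fun i => Rabs (coord (Rd_of_seq d (G y)) i - coord (Rd_of_seq d (G w)) i)) <= INR n * eta).
  { induction n; intros Hnd; [exists 1; split; [lra|]; intros; simpl; lra|].
    destruct (IHn ltac:(lia)) as [d1 [Hd1 P1]]. destruct (HG n ltac:(lia) eta Heta) as [d2 [Hd2 P2]].
    exists (Rmin d1 d2). split; [apply Rmin_pos; auto|]. intros y Hy.
    specialize (P1 y (Rlt_le_trans _ _ _ Hy (Rmin_l _ _))). specialize (P2 y (Rlt_le_trans _ _ _ Hy (Rmin_r _ _))).
    change (sumR (S n) ?f) with (sumR n f + f n). rewrite S_INR, !coord_Rd_of_seq by lia. lra. }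
  destruct (Hn d (le_n d)) as [del [Hdel P]]. exists del; split; auto. intros y Hy.
  eapply Rle_lt_trans; [apply distRd_le_sum_abs|]. eapply Rle_lt_trans; [apply P; auto|].
  unfold eta. apply Rmult_lt_reg_r with (INR d + 1); [lra|].
  replace (INR d * (e / (INR d + 1)) * (INR d + 1)) with (INR d * e) by (field; lra). nra.
Qed.

End Calculus.

(** * A soft minimum of parabolas *)

Lemma derivable_pt_lim_affine (c k t : R) : derivable_pt_lim (fun t => c + k * t) t k.
Proof.
  intros e He. exists (mkposreal 1 Rlt_0_1). intros h Hh _.
  replace ((c + k * (t + h) - (c + k * t)) / h - k) with 0 by (field; auto). rewrite Rabs_R0; auto.
Qed.

Lemma ln_le_compat x y : 0 < x -> x <= y -> ln x <= ln y.
Proof. intros Hx [H|<-]; [left; apply ln_increasing; auto|lra]. Qed.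

Lemma exp_le_compat x y : x <= y -> exp x <= exp y.
Proof. intros [H|<-]; [left; apply exp_increasing; auto|lra]. Qed.

Section Softmin.
Context {d : nat} (P : list (Rd d)) (a : Rd d -> R) (eps tau : R).

(* [softmin w] approximates [min_{p in P} (a p + |w - p|^2 / eps)] from below,
   within [tau * ln (length P)]. *)
Definition softmin_weight (p w : Rd d) : R := exp (- (a p + sqdist w p / eps) / tau).
Definition softmin_mass (w : Rd d) : R := lsum P (fun p => softmin_weight p w).
Definition softmin (w : Rd d) : R := - tau * ln (softmin_mass w).
Definition softmin_grad (w : Rd d) (i : nat) : R :=
  lsum P (fun p => softmin_weight p w * (2 * (coord w i - coord p i) / eps)) / softmin_mass w.

Hypotheses (Heps : eps > 0) (Htau : tau > 0) (HP : P <> nil).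

Lemma softmin_weight_le_mass p w : In p P -> softmin_weight p w <= softmin_mass w.
Proof. intros Hp. apply (lsum_term_le P (fun p => softmin_weight p w)); auto. intros; left; apply exp_pos. Qed.

Lemma softmin_mass_pos w : 0 < softmin_mass w.
Proof.
  destruct P as [|p P'] eqn:E; [congruence|].
  pose proof (exp_pos (- (a p + sqdist w p / eps) / tau)).
  pose proof (softmin_weight_le_mass p w ltac:(rewrite E; left; auto)). unfold softmin_weight in *. lra.
Qed.

Lemma has_grad_softmin_weight p w :
  has_grad (softmin_weight p) (fun i => softmin_weight p w * (- (1 / eps) / tau) * (2 * (coord w i - coord p i))) w.
Proof.
  set (phi := fun t => - a p / tau + (- (1 / eps) / tau) * t).
  assert (H1 : has_grad (fun y => phi (sqdist y p)) (fun i => (- (1 / eps) / tau) * (2 * (coord w i - coord p i))) w).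
  { apply has_grad_comp; [apply derivable_pt_lim_affine|apply has_grad_sqdist]. }
  pose proof (has_grad_comp _ _ w exp _ (derivable_pt_lim_exp _) H1).
  eapply has_grad_ext; [| |apply H].
  - intros y. unfold softmin_weight, phi. f_equal. field. lra.
  - intros i Hi. simpl. unfold softmin_weight, phi.
    replace (- (a p + sqdist w p / eps) / tau) with (- a p / tau + - (1 / eps) / tau * sqdist w p) by (field; lra).
    ring.
Qed.

Lemma has_grad_softmin w : has_grad softmin (softmin_grad w) w.
Proof.
  assert (H1 : has_grad softmin_mass
     (fun i => lsum P (fun p => softmin_weight p w * (- (1 / eps) / tau) * (2 * (coord w i - coord p i)))) w).
  { apply (has_grad_lsum P softmin_weight). intros; apply has_grad_softmin_weight. }
  pose proof (softmin_mass_pos w).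
  assert (Hd : derivable_pt_lim (fun t => - tau * ln t) (softmin_mass w) (- tau * / softmin_mass w)).
  { apply (derivable_pt_lim_scal ln). apply derivable_pt_lim_ln; auto. }
  eapply has_grad_ext; [| |apply (has_grad_comp _ _ w _ _ Hd H1)]; [reflexivity|].
  intros i Hi. unfold softmin_grad.
  rewrite (lsum_ext P _ (fun p => (- (1 / eps) / tau * eps) *
                                (softmin_weight p w * (2 * (coord w i - coord p i) / eps))))
    by (intros; field; split; lra).
  rewrite lsum_scal. field. split; lra.
Qed.

Lemma cont_at_softmin_grad w i : (i < d)%nat -> cont_at (fun y => softmin_grad y i) w.
Proof.
  intros Hi. unfold softmin_grad, Rdiv at 2. apply cont_at_mult.
  - apply (cont_at_lsum P (fun p y => softmin_weight p y * (2 * (coord y i - coord p i) / eps))).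
    intros p _. apply cont_at_mult; [eapply has_grad_cont, has_grad_softmin_weight|].
    apply (cont_at_ext (fun y => (2 / eps) * coord y i + (- (2 / eps) * coord p i))); [intros y; field; lra|].
    apply cont_at_plus; [apply cont_at_mult|]; auto using cont_at_const, cont_at_coord.
  - apply cont_at_inv; [apply softmin_mass_pos|].
    eapply has_grad_cont. apply (has_grad_lsum P softmin_weight). intros; apply has_grad_softmin_weight.
Qed.

Lemma softmin_C1 (K : Rd d -> Prop) : is_C1_deriv K softmin (fun w => Rd_of_seq d (softmin_grad w)).
Proof.
  split.
  - intros x Kx e He.
    destruct (cont_at_Rd_of_seq softmin_grad x) with e as [del [Hdel Hd]]; auto.
    + intros i Hi. apply cont_at_softmin_grad; auto.
    + exists del; split; auto.
  - intros x Kx e He. destruct (has_grad_softmin x (e / 2) ltac:(lra)) as [del [Hdel Hd]].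
    exists del. split; auto. intros y Ky Hyx Hy. specialize (Hd y Hy). pose proof (distRd_pos y x Hyx).
    unfold inner_diff. rewrite (sumR_ext d _ (fun i => softmin_grad x i * (coord y i - coord x i)))
      by (intros; rewrite coord_Rd_of_seq; auto).
    unfold Rdiv. rewrite Rabs_mult, Rabs_inv, (Rabs_right (distRd y x)) by lra.
    apply Rmult_lt_reg_r with (distRd y x); auto. rewrite Rmult_assoc, Rinv_l, Rmult_1_r by lra. nra.
Qed.

Lemma softmin_le w j : In j P -> softmin w <= a j + sqdist w j / eps.
Proof.
  intros Hj. unfold softmin. pose proof (softmin_mass_pos w).
  pose proof (ln_le_compat _ _ (exp_pos _) (softmin_weight_le_mass j w Hj)) as Hln.
  unfold softmin_weight in Hln. rewrite ln_exp in Hln.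
  apply (Rmult_le_compat_l tau _ _ (Rlt_le _ _ Htau)) in Hln.
  replace (tau * (- (a j + sqdist w j / eps) / tau)) with (- (a j + sqdist w j / eps)) in Hln by (field; lra).
  lra.
Qed.

Lemma softmin_ge w m : (forall p, In p P -> m <= a p + sqdist w p / eps) ->
  m - tau * ln (INR (length P)) <= softmin w.
Proof.
  intros Hm. unfold softmin. pose proof (softmin_mass_pos w).
  assert (HN : 0 < INR (length P)) by (destruct P; [congruence|simpl length; apply lt_0_INR; lia]).
  assert (softmin_mass w <= INR (length P) * exp (- m / tau)).
  { unfold softmin_mass. rewrite <- lsum_const. apply lsum_le. intros p Hp. unfold softmin_weight.
    apply exp_le_compat. unfold Rdiv. apply Rmult_le_compat_r; [left; apply Rinv_0_lt_compat; auto|].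
    specialize (Hm p Hp). lra. }
  pose proof (ln_le_compat _ _ H H0) as Hln. rewrite ln_mult, ln_exp in Hln by (auto; apply exp_pos).
  apply (Rmult_le_compat_l tau _ _ (Rlt_le _ _ Htau)) in Hln.
  replace (tau * (ln (INR (length P)) + - m / tau)) with (tau * ln (INR (length P)) - m) in Hln by (field; lra).
  lra.
Qed.

End Softmin.

Lemma sq_div_mul r e : e > 0 -> r ^ 2 / e * e = r ^ 2.
Proof. intros He. field. lra. Qed.

(* The two estimates on the potential [a p + r^2 / eps] that drive the bounds on the soft minimum:
   parabolas centred farther than [s/2] never compete, and nearer ones inherit the
   Lipschitz bound on [a]. *)
Lemma potential_ge_lipschitz (au ap r eps T s : R) : eps > 0 -> 0 <= s -> 0 <= r -> au <= T -> 0 <= ap ->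
  eps * (T + 5) <= (s / 2) ^ 2 -> (r <= s / 2 -> au <= ap + r) ->
  au - eps / 4 <= ap + r ^ 2 / eps.
Proof.
  intros He Hs0 Hr HT Hap Hs Hlip. pose proof (sq_div_mul r eps He).
  destruct (Rle_lt_dec r (s / 2)) as [Hrs|Hrs].
  - specialize (Hlip Hrs).
    assert (r - eps / 4 <= r ^ 2 / eps); [|lra].
    apply Rmult_le_reg_r with eps; [lra|]. rewrite H. pose proof (pow2_ge_0 (r - eps / 2)). nra.
  - assert (T + 5 <= r ^ 2 / eps); [|lra].
    apply Rmult_le_reg_r with eps; [lra|]. rewrite H. nra.
Qed.

Lemma potential_gap (aj ap rj rp eps T s : R) : 0 < eps <= 1 -> 0 <= s -> 0 <= rj < eps -> 3 * eps <= rp ->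
  aj <= T -> 0 <= ap -> eps * (T + 5) <= (s / 2) ^ 2 -> (rp <= s / 2 -> aj <= ap + rj + rp) ->
  aj + rj ^ 2 / eps + 4 * eps <= ap + rp ^ 2 / eps.
Proof.
  intros He Hs0 Hrj Hrp HT Hap Hs Hlip. pose proof (sq_div_mul rj eps ltac:(lra)).
  pose proof (sq_div_mul rp eps ltac:(lra)).
  assert (rj ^ 2 / eps < eps) by (apply Rmult_lt_reg_r with eps; [lra|]; rewrite H; nra).
  destruct (Rle_lt_dec rp (s / 2)) as [Hrs|Hrs].
  - specialize (Hlip Hrs).
    assert (3 * rp <= rp ^ 2 / eps) by (apply Rmult_le_reg_r with eps; [lra|]; rewrite H0; nra). lra.
  - assert (T + 5 <= rp ^ 2 / eps) by (apply Rmult_le_reg_r with eps; [lra|]; rewrite H0; nra). lra.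
Qed.

Section SoftminBounds.
Context {d : nat} (K : Rd d -> Prop) (P : list (Rd d)) (a : Rd d -> R) (eps tau T s : R).
Hypotheses (Heps : 0 < eps <= 1) (Htau : tau > 0)
  (HPK : forall p, In p P -> K p)
  (Hnet : forall w, K w -> exists p, In p P /\ distRd w p < eps)
  (Ha : forall w, K w -> 0 <= a w <= T)
  (Hlip : forall u v, K u -> K v -> distRd u v < s -> a u <= a v + distRd u v)
  (Hscale : eps <= s / 2) (HTs : eps * (T + 5) <= (s / 2) ^ 2).

Lemma net_nonempty w : K w -> P <> nil.
Proof. intros Kw ->. destruct (Hnet w Kw) as [p [[] _]]. Qed.

Lemma softmin_le_net w j : K w -> In j P -> distRd w j < eps ->
  softmin P a eps tau w < a j + eps.
Proof.
  intros Kw Hj Hwj. pose proof (softmin_le P a eps tau ltac:(lra) Htau (net_nonempty w Kw) w j Hj). rewrite sqdist_eq in H.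
  pose proof (distRd_nonneg w j). pose proof (sq_div_mul (distRd w j) eps ltac:(lra)).
  assert (distRd w j ^ 2 / eps < eps) by (apply Rmult_lt_reg_r with eps; [lra|]; rewrite H1; nra). lra.
Qed.

Lemma softmin_lt_add w : K w -> softmin P a eps tau w < a w + 2 * eps.
Proof.
  intros Kw. destruct (Hnet w Kw) as [j [Hj Hwj]]. pose proof (softmin_le_net w j Kw Hj Hwj).
  pose proof (Hlip j w (HPK j Hj) Kw). rewrite distRd_sym in H0. specialize (H0 ltac:(lra)). lra.
Qed.

Hypothesis (Hln : tau * ln (INR (length P)) <= eps).

Lemma softmin_ge_sub w : K w -> a w - 5 / 4 * eps <= softmin P a eps tau w.
Proof.
  intros Kw. enough (a w - eps / 4 - tau * ln (INR (length P)) <= softmin P a eps tau w) by lra.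
  apply softmin_ge; [auto|apply (net_nonempty w Kw)|].
  intros p Hp. rewrite sqdist_eq. pose proof (Ha w Kw). pose proof (Ha p (HPK p Hp)).
  apply (potential_ge_lipschitz _ _ _ _ T s); auto using distRd_nonneg; try lra.
  intros Hr. apply Hlip; auto. lra.
Qed.

Lemma abs_softmin_le w : K w -> Rabs (softmin P a eps tau w) <= T + 1.
Proof.
  intros Kw. destruct (Hnet w Kw) as [j [Hj Hwj]]. pose proof (softmin_le_net w j Kw Hj Hwj).
  pose proof (Ha j (HPK j Hj)).
  assert (0 - tau * ln (INR (length P)) <= softmin P a eps tau w).
  { apply softmin_ge; [auto|apply (net_nonempty w Kw)|].
    intros p Hp. pose proof (Ha p (HPK p Hp)). unfold sqdist.
    pose proof (sumR_sq_nonneg d (fun i => coord w i - coord p i)).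
    assert (0 <= sumR d (fun i => (coord w i - coord p i) ^ 2) / eps) by (apply Rmult_le_pos; [lra|left; apply Rinv_0_lt_compat; lra]).
    lra. }
  apply Rabs_le. lra.
Qed.

End SoftminBounds.

Section SoftminGradient.
Context {d : nat} (K : Rd d -> Prop) (P : list (Rd d)) (a : Rd d -> R) (eps tau T s D : R).
Hypotheses (Heps : 0 < eps <= 1) (Htau : tau > 0)
  (HPK : forall p, In p P -> K p)
  (Hnet : forall w, K w -> exists p, In p P /\ distRd w p < eps)
  (Ha : forall w, K w -> 0 <= a w <= T)
  (Hlip : forall u v, K u -> K v -> distRd u v < s -> a u <= a v + distRd u v)
  (Hscale : eps <= s / 2) (HTs : eps * (T + 5) <= (s / 2) ^ 2)
  (HD : forall u v, K u -> K v -> distRd u v <= D)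
  (Htemp : INR (length P) * (2 * D / eps * exp (- (4 * eps) / tau)) <= 1).

Local Notation weight := (softmin_weight a eps tau).

Lemma softmin_weight_far w j p : K w -> In j P -> distRd w j < eps -> In p P ->
  3 * eps <= distRd w p -> weight p w <= exp (- (4 * eps) / tau) * weight j w.
Proof.
  intros Kw Hj Hwj Hp Hwp. unfold softmin_weight. rewrite <- exp_plus. apply exp_le_compat.
  rewrite !sqdist_eq.
  assert (a j + distRd w j ^ 2 / eps + 4 * eps <= a p + distRd w p ^ 2 / eps).
  { pose proof (Ha j (HPK j Hj)). pose proof (Ha p (HPK p Hp)).
    apply (potential_gap _ _ _ _ _ T s); auto using distRd_nonneg; try lra.
    intros Hr. pose proof (distRd_triangle j w p) as Htri. rewrite (distRd_sym j w) in Htri.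
    pose proof (Hlip j p (HPK j Hj) (HPK p Hp) ltac:(lra)). lra. }
  unfold Rdiv. rewrite <- Rmult_plus_distr_r. apply Rmult_le_compat_r; [left; apply Rinv_0_lt_compat; lra|].
  lra.
Qed.

Lemma softmin_weight_moment w j p : K w -> In j P -> distRd w j < eps -> In p P ->
  weight p w * (2 / eps) * distRd w p <=
  6 * weight p w + 2 * D / eps * exp (- (4 * eps) / tau) * weight j w.
Proof.
  intros Kw Hj Hwj Hp. pose proof (exp_pos (- (a p + sqdist w p / eps) / tau)).
  pose proof (exp_pos (- (a j + sqdist w j / eps) / tau)). fold (weight p w) (weight j w) in *.
  pose proof (exp_pos (- (4 * eps) / tau)). pose proof (distRd_nonneg w p).
  assert (Hc : 0 <= 2 * D / eps).
  { pose proof (HD w w Kw Kw). pose proof (distRd_nonneg w w).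
    apply Rmult_le_pos; [lra|left; apply Rinv_0_lt_compat; lra]. }
  assert (Hk : 0 < 2 / eps) by (apply Rdiv_lt_0_compat; lra).
  destruct (Rlt_le_dec (distRd w p) (3 * eps)) as [Hnear|Hfar].
  - assert (2 / eps * distRd w p <= 6).
    { apply Rmult_le_reg_r with eps; [lra|]. unfold Rdiv.
      replace (2 * / eps * distRd w p * eps) with (2 * distRd w p) by (field; lra). lra. }
    assert (weight p w * (2 / eps * distRd w p) <= weight p w * 6) by (apply Rmult_le_compat_l; lra).
    assert (0 <= 2 * D / eps * exp (- (4 * eps) / tau) * weight j w) by (apply Rmult_le_pos; [apply Rmult_le_pos|]; lra).
    rewrite Rmult_assoc. lra.
  - pose proof (softmin_weight_far w j p Kw Hj Hwj Hp Hfar).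
    pose proof (HD w p Kw (HPK p Hp)).
    apply Rle_trans with (exp (- (4 * eps) / tau) * weight j w * (2 / eps) * D).
    + apply Rmult_le_compat; try nra.
    + replace (exp (- (4 * eps) / tau) * weight j w * (2 / eps) * D)
        with (2 * D / eps * exp (- (4 * eps) / tau) * weight j w) by (field; lra).
      lra.
Qed.

Lemma vnorm_softmin_grad_le w : K w -> vnorm (Rd_of_seq d (softmin_grad P a eps tau w)) <= 7.
Proof.
  intros Kw. destruct (Hnet w Kw) as [j [Hj Hwj]].
  assert (HP : P <> nil) by (intros ->; contradiction).
  set (S := softmin_mass P a eps tau w). assert (HS : 0 < S) by (apply softmin_mass_pos; auto; lra).
  assert (Hsum : lsum P (fun p => weight p w * (2 / eps) * distRd w p) <= 7 * S).
  { eapply Rle_trans; [apply lsum_le; intros p Hp; apply (softmin_weight_moment w j p Kw Hj Hwj Hp)|].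
    rewrite lsum_plus, lsum_scal, lsum_const. fold (softmin_mass P a eps tau w) S.
    pose proof (softmin_weight_le_mass P a eps tau j w Hj). fold S in H.
    pose proof (exp_pos (- (a j + sqdist w j / eps) / tau)). fold (weight j w) in H0.
    assert (INR (length P) * (2 * D / eps * exp (- (4 * eps) / tau) * weight j w) <= weight j w).
    { rewrite <- Rmult_assoc. rewrite <- (Rmult_1_l (weight j w)) at 2. apply Rmult_le_compat_r; lra. }
    lra. }
  change (vnorm (Rd_of_seq d (softmin_grad P a eps tau w)))
    with (enorm d (coord (Rd_of_seq d (softmin_grad P a eps tau w)))).
  rewrite (enorm_ext d _ (fun i => / S * lsum P (fun p => (weight p w * (2 / eps)) * (coord w i - coord p i)))).
  2:{ intros i Hi. rewrite coord_Rd_of_seq by auto. unfold softmin_grad. fold S.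
      rewrite Rmult_comm. unfold Rdiv. f_equal. apply lsum_ext. intros; field; lra. }
  rewrite enorm_scal, Rabs_right by (left; apply Rinv_0_lt_compat; auto).
  eapply Rle_trans.
  { apply Rmult_le_compat_l; [left; apply Rinv_0_lt_compat; auto|].
    apply (enorm_lsum d P (fun p i => (weight p w * (2 / eps)) * (coord w i - coord p i))). }
  rewrite (lsum_ext P _ (fun p => weight p w * (2 / eps) * distRd w p)).
  2:{ intros p _. rewrite enorm_scal, Rabs_right; [reflexivity|].
      pose proof (exp_pos (- (a p + sqdist w p / eps) / tau)). pose proof (Rdiv_lt_0_compat 2 eps ltac:(lra) ltac:(lra)).
      unfold softmin_weight. nra. }
  apply Rle_trans with (/ S * (7 * S)); [apply Rmult_le_compat_l; auto; left; apply Rinv_0_lt_compat; auto|].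
  right; field; lra.
Qed.

End SoftminGradient.

(** * Smooth approximation of locally 1-Lipschitz functions *)

Lemma C1norm_le {d} (K : Rd d -> Prop) (hK : compact_Rd K) f df B1 B2 :
  (exists w, K w) -> is_C1_deriv K f df ->
  (forall w, K w -> Rabs (f w) <= B1) -> (forall w, K w -> vnorm (df w) <= B2) ->
  C1norm K f <= B1 + B2.
Proof.
  intros [w0 Kw0] Hdf H1 H2. unfold C1norm, supK.
  assert (supr (fun r => exists x, K x /\ r = Rabs (f x)) <= B1)
    by (apply supr_le; [eauto|intros r [x [Kx ->]]; auto]).
  assert (supr (fun r => exists x, K x /\ r = vnorm (df x)) <= B2)
    by (apply supr_le; [eauto|intros r [x [Kx ->]]; auto]).
  assert (infr (fun r => exists df, is_C1_deriv K f df /\ r = supK K (fun x => vnorm (df x)))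
          <= supK K (fun x => vnorm (df x))); [|unfold supK in *; lra].
  apply infr_le with 0; [|eauto].
  intros r [df' [Hdf' ->]].
  destruct (compact_continuous_vnorm_bounded K hK df' (proj1 Hdf')) as [M HM].
  apply Rle_trans with (vnorm (df' w0)); [apply vnorm_nonneg|].
  apply le_supr with M; [intros r [x [Kx ->]]; auto|eauto].
Qed.

(* The temperature [tau] must be small enough both for the soft minimum to be
   close to the minimum and for far parabolas not to affect the gradient. *)
Lemma exists_temperature N D eps : 1 <= N -> 0 <= D -> eps > 0 ->
  exists tau, tau > 0 /\ tau * ln N <= eps /\ N * (2 * D / eps * exp (- (4 * eps) / tau)) <= 1.
Proof.
  intros HN HD He. set (tau := Rmin (eps / (N + 1)) (2 * eps ^ 2 / (N * D + 1))).
  assert (Ht : tau > 0) by (apply Rmin_pos; apply Rdiv_lt_0_compat; nra).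
  pose proof (Rmin_l (eps / (N + 1)) (2 * eps ^ 2 / (N * D + 1))) as Ht1.
  pose proof (Rmin_r (eps / (N + 1)) (2 * eps ^ 2 / (N * D + 1))) as Ht2. fold tau in Ht1, Ht2.
  exists tau. split; [auto|split].
  - assert (0 <= ln N <= N).
    { split; [rewrite <- ln_1; apply ln_le_compat; lra|].
      left. pose proof (exp_ineq1 N ltac:(lra)). rewrite <- (ln_exp N) at 2. apply ln_increasing; lra. }
    apply Rle_trans with (eps / (N + 1) * N); [apply Rmult_le_compat; lra|].
    apply Rmult_le_reg_r with (N + 1); [lra|].
    replace (eps / (N + 1) * N * (N + 1)) with (eps * N) by (field; lra). nra.
  - assert (Hexp : exp (- (4 * eps) / tau) <= tau / (4 * eps)).
    { replace (- (4 * eps) / tau) with (- (4 * eps / tau)) by (field; lra).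
      assert (Hq : 0 < 4 * eps / tau) by (apply Rdiv_lt_0_compat; lra).
      pose proof (exp_ineq1 (4 * eps / tau) ltac:(lra)).
      rewrite exp_Ropp. replace (tau / (4 * eps)) with (/ (4 * eps / tau)) by (field; lra).
      apply Rinv_le_contravar; [apply Rdiv_lt_0_compat|]; lra. }
    assert (Hc : 0 <= 2 * D / eps) by (apply Rmult_le_pos; [lra|left; apply Rinv_0_lt_compat; lra]).
    apply Rle_trans with (N * (2 * D / eps * (2 * eps ^ 2 / (N * D + 1) / (4 * eps)))).
    + apply Rmult_le_compat_l; [lra|]. apply Rmult_le_compat_l; auto.
      apply Rle_trans with (tau / (4 * eps)); auto.
      unfold Rdiv. apply Rmult_le_compat_r; [left; apply Rinv_0_lt_compat; lra|auto].
    + replace (N * (2 * D / eps * (2 * eps ^ 2 / (N * D + 1) / (4 * eps)))) with (N * D / (N * D + 1))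
        by (field; nra).
      apply Rmult_le_reg_r with (N * D + 1); [nra|].
      unfold Rdiv. rewrite Rmult_assoc, Rinv_l; nra.
Qed.

Lemma smooth_approximation {d} (K : Rd d -> Prop) (hK : compact_Rd K) (a : Rd d -> R) (T s : R) :
  (exists w, K w) -> s > 0 ->
  (forall w, K w -> 0 <= a w <= T) ->
  (forall u v, K u -> K v -> distRd u v < s -> a u <= a v + distRd u v) ->
  forall eta, eta > 0 -> exists f, C1_on K f /\ C1norm K f <= T + 8 /\
    forall w, K w -> a w - eta <= f w <= a w + eta.
Proof.
  intros [w0 Kw0] Hs Ha Hlip eta Heta.
  assert (HT : 0 <= T) by (pose proof (Ha w0 Kw0); lra).
  set (eps := Rmin (Rmin 1 (eta / 2)) (Rmin (s / 2) (s ^ 2 / (4 * (T + 5))))).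
  assert (He : 0 < eps <= 1).
  { split; [repeat apply Rmin_pos; try apply Rdiv_lt_0_compat; nra|]. eapply Rle_trans; apply Rmin_l. }
  assert (He2 : eps <= eta / 2) by (eapply Rle_trans; [apply Rmin_l|apply Rmin_r]).
  assert (Hscale : eps <= s / 2) by (eapply Rle_trans; [apply Rmin_r|apply Rmin_l]).
  assert (HTs : eps * (T + 5) <= (s / 2) ^ 2).
  { assert (eps <= s ^ 2 / (4 * (T + 5))) by (eapply Rle_trans; [apply Rmin_r|apply Rmin_r]).
    apply Rle_trans with (s ^ 2 / (4 * (T + 5)) * (T + 5)); [apply Rmult_le_compat_r; lra|].
    right; field; lra. }
  destruct (compact_finite_net K hK eps ltac:(lra)) as [P [HPK Hnet]].
  assert (HP : P <> nil) by (intros ->; destruct (Hnet w0 Kw0) as [? [[] _]]).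
  assert (HN : 1 <= INR (length P)) by (destruct P; [congruence|simpl length; rewrite S_INR; pose proof (pos_INR (length P)); lra]).
  destruct (compact_bounded K hK w0) as [M HM].
  set (D := 2 * M).
  assert (HD : forall u v, K u -> K v -> distRd u v <= D).
  { intros u v Ku Kv. pose proof (distRd_triangle u w0 v). rewrite (distRd_sym w0 v) in H.
    pose proof (HM u Ku). pose proof (HM v Kv). unfold D; lra. }
  assert (HD0 : 0 <= D) by (pose proof (HD w0 w0 Kw0 Kw0); pose proof (distRd_nonneg w0 w0); lra).
  destruct (exists_temperature (INR (length P)) D eps HN HD0 ltac:(lra)) as [tau [Htau [Hln Htemp]]].
  exists (softmin P a eps tau). split; [|split].
  - eexists. apply softmin_C1; auto; lra.
  - replace (T + 8) with ((T + 1) + 7) by ring.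
    apply (C1norm_le K hK _ _ (T + 1) 7 (ex_intro _ w0 Kw0) (softmin_C1 P a eps tau ltac:(lra) Htau HP K)).
    + intros w Kw. apply (abs_softmin_le K P a eps tau T); auto.
    + intros w Kw. apply (vnorm_softmin_grad_le K P a eps tau T s D); auto.
  - intros w Kw. pose proof (softmin_ge_sub K P a eps tau T s He Htau HPK Hnet Ha Hlip Hscale HTs Hln w Kw).
    pose proof (softmin_lt_add K P a eps tau s He Htau HPK Hnet Hlip Hscale w Kw). lra.
Qed.

(** * The chain distance is controlled by the pointwise bound *)

Section PointwiseBound.
Context {d : nat} (K : Rd d -> Prop) (hK : compact_Rd K) (hconn : connected_Rd K).
Variables (x : Rd d) (C : R).
Hypotheses (Kx : K x) (HC : C > 0)
  (Hbound : forall f : Rd d -> R, C1_on K f -> forall y, K y -> y <> x ->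
              Rabs (f y - f x) / distRd y x <= C * C1norm K f).

Lemma increment_le_C1norm f z : C1_on K f -> K z -> z <> x ->
  f z - f x <= C * C1norm K f * distRd z x.
Proof.
  intros Hf Kz Hzx. pose proof (distRd_pos z x Hzx). pose proof (Hbound f Hf z Kz Hzx).
  pose proof (Rle_abs (f z - f x)).
  assert (Rabs (f z - f x) <= C * C1norm K f * distRd z x); [|lra].
  apply Rmult_le_reg_r with (/ distRd z x); [apply Rinv_0_lt_compat; lra|].
  rewrite Rmult_assoc, Rinv_r, Rmult_1_r by lra. exact H0.
Qed.

(* Apply the bound to smooth approximations of [min(10, chain_dist s x)]:
   their C^1 norm is at most 18, and the truncation at 10 is harmless because
   the resulting estimate stays below 9. *)
Lemma chain_dist_le_pointwise_bound s z : s > 0 -> K z -> C * distRd z x <= 1 / 2 ->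
  chain_dist K s x z <= 18 * C * distRd z x.
Proof.
  intros Hs Kz Hz. pose proof (distRd_nonneg z x).
  destruct (classic (z = x)) as [->|Hzx].
  { rewrite distRd_refl. apply Rle_trans with (distRd x x);
      [apply chain_dist_le_distRd; auto; rewrite distRd_refl|rewrite distRd_refl]; lra. }
  set (a := fun w => Rmin 10 (chain_dist K s x w)).
  assert (Ha : forall w, K w -> 0 <= a w <= 10).
  { intros w Kw. split; [apply Rmin_glb; [lra|apply chain_dist_nonneg; auto]|apply Rmin_l]. }
  assert (Hlip : forall u v, K u -> K v -> distRd u v < s -> a u <= a v + distRd u v).
  { intros u v Ku Kv Huv. rewrite distRd_sym in Huv |- *.
    pose proof (chain_dist_step K hconn s x Hs Kx v u Kv Ku Huv). pose proof (distRd_nonneg v u).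
    unfold a, Rmin. repeat destruct Rle_dec; lra. }
  assert (Hax : a x = 0).
  { pose proof (chain_dist_le_distRd K hconn s x Hs Kx x Kx). pose proof (chain_dist_nonneg K hconn s x Hs Kx x Kx).
    rewrite distRd_refl in *. unfold a, Rmin. destruct Rle_dec; lra. }
  assert (Haz : a z <= 18 * C * distRd z x).
  { apply Rle_plus_epsilon. intros e He.
    destruct (smooth_approximation K hK a 10 s (ex_intro _ x Kx) Hs Ha Hlip (e / 2) ltac:(lra))
      as [f [Hf [Hnorm Happrox]]].
    pose proof (increment_le_C1norm f z Hf Kz Hzx).
    assert (C * C1norm K f * distRd z x <= 18 * C * distRd z x)
      by (apply Rmult_le_compat_r; [lra|]; replace (10 + 8) with 18 in Hnorm by ring; nra).
    pose proof (Happrox x Kx). pose proof (Happrox z Kz). lra. }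
  unfold a, Rmin in Haz. destruct Rle_dec; lra.
Qed.

Lemma fine_chains_pointwise_bound z : K z -> C * distRd z x <= 1 / 2 ->
  fine_chains K x z (18 * C * distRd z x).
Proof.
  intros Kz Hz s Hs.
  destruct (chain_dist_approx K hconn s x Hs Kx z s Kz Hs) as [l [Hl Hlen]].
  exists l. split; auto. pose proof (chain_dist_le_pointwise_bound s z Hs Kz Hz). lra.
Qed.

End PointwiseBound.

Theorem mainTheorem8 (d : nat) (K : Rd d -> Prop)
  (hK : compact_Rd K) (hconn : connected_Rd K)
  (hmark : forall x, K x -> exists Cx, Cx > 0 /\
     forall f : Rd d -> R, C1_on K f ->
       forall y, K y -> y <> x ->
         Rabs (f y - f x) / distRd y x <= Cx * C1norm K f) :
  pointwise_Whitney_regular K.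
Proof.
  intros x Kx. destruct (hmark x Kx) as [C [HC Hbound]].
  exists (fun y => distRd y x < / (2 * C)), (18 * C).
  split; [apply open_ball|]. split; [rewrite distRd_refl; apply Rinv_0_lt_compat; lra|]. split; [lra|].
  intros y Vy Ky.
  assert (Hy : C * distRd y x <= 1 / 2).
  { apply Rmult_le_reg_r with (/ C); [apply Rinv_0_lt_compat; lra|].
    replace (C * distRd y x * / C) with (distRd y x) by (field; lra).
    replace (1 / 2 * / C) with (/ (2 * C)) by (field; lra). lra. }
  pose proof (fine_chains_pointwise_bound K hK hconn x C Kx HC Hbound y Ky Hy) as Hchains.
  destruct (fine_chains_rectifiable_path K hK x y _ Kx Ky Hchains) as [g [a [b [H1 [H2 [H3 [H4 H5]]]]]]].
  exists g, a, b. do 4 (split; [assumption|]). rewrite (distRd_sym x y). lra.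
Qed.
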